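(* Let $n\ge2$ and $\xi=(\xi^{n-1},\xi_n)\in M_a^{n-1}\times M_s\subset[M(H^\infty(\mathbb{D}))]^n$. Let $\zeta=\{z_k\}_{k\in\mathbb{N}}\subset\mathbb{D}^{n-1}$ be a sequence that is the Cartesian product of interpolating sequences for $H^\infty(\mathbb{D})$ in the coordinate disks, is interpolating for $H^\infty(\mathbb{D}^{n-1})$, and whose closure in $[M(H^\infty(\mathbb{D}))]^{n-1}$ contains $\xi^{n-1}$. Let $R:H^\infty(\mathbb{D}^n)\to H^\infty(\mathbb{D}\times\mathbb{N})$, $R(f)(k):=f(z_k,\cdot)$, and $R^*(\varphi)=\varphi\circ R$. Let $G$ be an analytic disk in $M(H^\infty(\mathbb{D}\times\mathbb{N}))$ such that $R^*(G)$ contains a point $\eta\in F_\xi=\pi_n^{-1}(\xi)$. Then $R^*(G)\subset F_\xi$.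
   Context: $\mathbb{D}$ is the open unit disk; $M(B)$ is the maximal ideal space of a commutative unital Banach algebra $B$ with weak-* topology, $\hat f$ the Gelfand transform. $H^\infty(\mathbb{D}\times\mathbb{N})$ is the algebra of sequences $(g_k)_{k\in\mathbb{N}}$ of functions in $H^\infty(\mathbb{D})$ with $\sup_k\|g_k\|_\infty<\infty$, normed by this supremum. An analytic disk in $M(H^\infty(\mathbb{D}\times\mathbb{N}))$ is the image of a continuous injective map $\tau:\mathbb{D}\to M(H^\infty(\mathbb{D}\times\mathbb{N}))$ with $\hat f\circ\tau\in H^\infty(\mathbb{D})$ for all $f$ in the algebra. Interpolating sequences: every bounded sequence of values is attained by a function of the algebra. $\mathbb{D}^n$ embeds into $M(H^\infty(\mathbb{D}^n))$ by point evaluations with closure $\operatorname{cl}(\mathbb{D}^n)$; $\mathbb{D}^m$ embeds in $[M(H^\infty(\mathbb{D}))]^m$ coordinatewise. $\pi_n(\varphi)=(\varphi\circ\iota_1,\dots,\varphi\circ\iota_n)$ with $\iota_j(f)(z)=f(z_j)$; $F_\xi:=\pi_n^{-1}(\xi)\cap\operatorname{cl}(\mathbb{D}^n)$, which in this setting equals $\pi_n^{-1}(\xi)$. Pseudohyperbolic distance on $M(H^\infty(\mathbb{D}))$: $\rho(\xi,\eta)=\sup\{|\hat f(\eta)|:\hat f(\xi)=0,\|f\|_\infty\le1\}$; Gleason parts are the classes $\{\eta:\rho(\xi,\eta)<1\}$; $M_a$ is the union of non-singleton Gleason parts and $M_s$ its complement. *)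

From Stdlib Require Import Reals.
From Coquelicot Require Import Coquelicot.
From mathcomp Require Import ssreflect ssrfun ssrbool eqtype ssrnat fintype.

Set Implicit Arguments.
Unset Strict Implicit.
Open Scope R_scope.
Open Scope C_scope.

Definition in_disk (w : C) : Prop := Rlt (Cmod w) 1.
Definition in_polydisk (n : nat) (z : 'I_n -> C) : Prop := forall j, in_disk (z j).

Definition upd (n : nat) (z : 'I_n -> C) (j : 'I_n) (w : C) : 'I_n -> C :=
  fun i => if i == j then w else z i.

(** (z, w) in C^(n-1) x C viewed as a point of C^n (w is the last coordinate). *)
Definition ext (n : nat) (z : 'I_n.-1 -> C) (w : C) : 'I_n -> C :=
  fun j => oapp z w (insub (nat_of_ord j) : option 'I_n.-1).

Definition C_differentiable (g : C -> C) (w : C) : Prop :=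
  exists l : C, forall eps : R, Rlt 0 eps -> exists delta : R, Rlt 0 delta /\
    forall h : C, Rlt 0 (Cmod h) -> Rlt (Cmod h) delta ->
      Rle (Cmod (g (w + h) - g w - l * h)) (eps * Cmod h).

(** H^oo(D): bounded holomorphic functions on the unit disk
    (values outside D are irrelevant). *)
Definition Hinf1 (f : C -> C) : Prop :=
  (exists M : R, forall w, in_disk w -> Rle (Cmod (f w)) M) /\
  (forall w, in_disk w -> C_differentiable f w).

Definition continuous_at_pt (n : nat) (f : ('I_n -> C) -> C) (z : 'I_n -> C) : Prop :=
  forall eps : R, Rlt 0 eps -> exists delta : R, Rlt 0 delta /\
    forall z' : 'I_n -> C, (forall j, Rlt (Cmod (z' j - z j)) delta) ->
      Rlt (Cmod (f z' - f z)) eps.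

(** H^oo(D^n): bounded holomorphic functions on the polydisk; holomorphic =
    continuous and holomorphic in each variable separately. *)
Definition Hinf (n : nat) (f : ('I_n -> C) -> C) : Prop :=
  (exists M : R, forall z, in_polydisk z -> Rle (Cmod (f z)) M) /\
  (forall z, in_polydisk z -> continuous_at_pt f z) /\
  (forall z, in_polydisk z -> forall j : 'I_n, C_differentiable (fun w => f (upd z j w)) (z j)).

(** H^oo(D x N): uniformly bounded sequences of H^oo(D) functions. *)
Definition HinfDN (g : nat -> C -> C) : Prop :=
  (forall k, forall w, in_disk w -> C_differentiable (g k) w) /\
  (exists M : R, forall k w, in_disk w -> Rle (Cmod (g k w)) M).

(** Characters (points of the maximal ideal space) of a commutative unital
    complex algebra whose elements are represented by the members of a
    predicate [P] on a carrier [A], modulo the equality [eqv]. *)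
Definition is_character (A : Type) (P : A -> Prop) (eqv : A -> A -> Prop)
    (add mul : A -> A -> A) (scal : C -> A -> A) (one : A) (phi : A -> C) : Prop :=
  (forall f g, P f -> P g -> phi (add f g) = phi f + phi g) /\
  (forall c f, P f -> phi (scal c f) = c * phi f) /\
  (forall f g, P f -> P g -> phi (mul f g) = phi f * phi g) /\
  phi one = 1 /\
  (forall f g, P f -> P g -> eqv f g -> phi f = phi g).

Definition char1 (phi : (C -> C) -> C) : Prop :=
  is_character Hinf1 (fun f g => forall w, in_disk w -> f w = g w)
    (fun f g w => f w + g w) (fun f g w => f w * g w) (fun c f w => c * f w)
    (fun _ => 1) phi.

Definition charn (n : nat) (phi : (('I_n -> C) -> C) -> C) : Prop :=
  is_character (@Hinf n) (fun f g => forall z, in_polydisk z -> f z = g z)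
    (fun f g z => f z + g z) (fun f g z => f z * g z) (fun c f z => c * f z)
    (fun _ => 1) phi.

Definition charDN (phi : (nat -> C -> C) -> C) : Prop :=
  is_character HinfDN (fun f g => forall k w, in_disk w -> f k w = g k w)
    (fun f g k w => f k w + g k w) (fun f g k w => f k w * g k w)
    (fun c f k w => c * f k w) (fun _ _ => 1) phi.

Definition char1_eq (phi psi : (C -> C) -> C) : Prop :=
  forall f, Hinf1 f -> phi f = psi f.

Definition rho (xi eta : (C -> C) -> C) : Rbar :=
  Lub_Rbar (fun r => exists f, Hinf1 f /\ (forall w, in_disk w -> Rle (Cmod (f w)) 1)
                              /\ xi f = 0 /\ r = Cmod (eta f)).

(** Gleason part of xi: {eta in M : rho(xi,eta) < 1}.
    M_a: points whose Gleason part is not a singleton; M_s: its complement in M. *)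
Definition in_Ma (xi : (C -> C) -> C) : Prop :=
  char1 xi /\
  exists eta, char1 eta /\ Rbar_lt (rho xi eta) (Coquelicot.Rbar.Finite 1%R) /\ ~ char1_eq xi eta.

Definition in_Ms (xi : (C -> C) -> C) : Prop := char1 xi /\ ~ in_Ma xi.

Definition interpolating1 (w : nat -> C) : Prop :=
  (forall k, in_disk (w k)) /\
  forall a : nat -> C, (exists M : R, forall k, Rle (Cmod (a k)) M) ->
    exists f, Hinf1 f /\ forall k, f (w k) = a k.

Definition interpolating (n : nat) (z : nat -> 'I_n -> C) : Prop :=
  (forall k, in_polydisk (z k)) /\
  forall a : nat -> C, (exists M : R, forall k, Rle (Cmod (a k)) M) ->
    exists f, Hinf f /\ forall k, f (z k) = a k.

Definition is_cartesian_product (m : nat) (z : nat -> 'I_m -> C) (s : 'I_m -> nat -> C) : Prop :=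
  (forall k, exists l : 'I_m -> nat, forall j, z k j = s j (l j)) /\
  (forall l : 'I_m -> nat, exists k, forall j, z k j = s j (l j)).

(** xi in [M(H^oo(D))]^m lies in the closure (product of weak-* topologies) of
    the points z_k embedded coordinatewise as point evaluations. *)
Definition in_closure_seq (m : nat) (z : nat -> 'I_m -> C) (xi : 'I_m -> (C -> C) -> C) : Prop :=
  forall (p : nat) (F : 'I_p -> C -> C) (eps : R), (forall i, Hinf1 (F i)) -> Rlt 0 eps ->
    exists k, forall (j : 'I_m) (i : 'I_p), Rlt (Cmod (F i (z k j) - xi j (F i))) eps.

Definition Rmap (n : nat) (z : nat -> 'I_n.-1 -> C) (f : ('I_n -> C) -> C) : nat -> C -> C :=
  fun k w => f (ext (z k) w).

Definition Rstar (n : nat) (z : nat -> 'I_n.-1 -> C) (phi : (nat -> C -> C) -> C)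
  : (('I_n -> C) -> C) -> C :=
  fun f => phi (Rmap z f).

Definition pi_n (n : nat) (phi : (('I_n -> C) -> C) -> C) (j : 'I_n) : (C -> C) -> C :=
  fun f => phi (fun z => f (z j)).

Definition join_pt (n : nat) (xi' : 'I_n.-1 -> (C -> C) -> C) (xin : (C -> C) -> C)
  : 'I_n -> (C -> C) -> C :=
  fun j => oapp xi' xin (insub (nat_of_ord j) : option 'I_n.-1).

Definition in_fiber (n : nat) (xi : 'I_n -> (C -> C) -> C) (eta : (('I_n -> C) -> C) -> C) : Prop :=
  charn eta /\ forall j : 'I_n, char1_eq (pi_n eta j) (xi j).

Definition analytic_disk_map (tau : C -> (nat -> C -> C) -> C) : Prop :=
  (forall w, in_disk w -> charDN (tau w)) /\
  (forall w1 w2, in_disk w1 -> in_disk w2 ->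
     (forall g, HinfDN g -> tau w1 g = tau w2 g) -> w1 = w2) /\
  (forall g, HinfDN g -> forall w, in_disk w ->
     forall eps : R, Rlt 0 eps -> exists delta : R, Rlt 0 delta /\
       forall w', in_disk w' -> Rlt (Cmod (w' - w)) delta -> Rlt (Cmod (tau w' g - tau w g)) eps) /\
  (forall g, HinfDN g -> Hinf1 (fun w => tau w g)).

(* For [j < n - 1] the [j]-th coordinate of [R^*(tau w)] only sees the
   functions [(f (z_k j))_k], which do not depend on the disk variable: they
   span a copy of [l^oo] in [H^oo(D x N)].  On such a function an analytic disk
   is constant, since its spectrum is totally disconnected: thresholding a
   sequence gives idempotents, whose values along the disk are [0] or [1] and
   vary holomorphically.  The last coordinate is [f |-> tau w (fun _ => f)],
   a holomorphic family of points of [M(H^oo(D))]; by a Cauchy estimate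
   [|h b - h a| <= sup |h| / 4] for nearby [a], [b] (proved here from Goursat's
   theorem on squares), the family stays in one Gleason part, which is the
   singleton [{xi_n}] because [xi_n] lies in [M_s]. *)

From Stdlib Require Import Reals Lra Psatz FunctionalExtensionality Classical.
From Coquelicot Require Import Coquelicot.
From mathcomp Require Import ssreflect ssrfun ssrbool eqtype ssrnat fintype.
Set Implicit Arguments.
Unset Strict Implicit.
Local Open Scope R_scope.
Local Open Scope C_scope.

Lemma Rlt_Rmin (x a b : R) : x < Rmin a b -> x < a /\ x < b.
Proof. by move=> H; split; apply: Rlt_le_trans H _; [apply: Rmin_l | apply: Rmin_r]. Qed.

Lemma C_ext (x y : C) : fst x = fst y -> snd x = snd y -> x = y.
Proof. by case: x => a b; case: y => c d /= -> ->. Qed.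

Lemma Cmod_distC (a b : C) : Cmod (a - b) = Cmod (b - a).
Proof. by rewrite -Cmod_opp; f_equal; ring. Qed.

Lemma Cmod_sub_ge (x y : C) : Cmod x - Cmod y <= Cmod (x - y).
Proof.
have := Cmod_triangle (x - y) y.
have -> : x - y + y = x by ring.
lra.
Qed.

Lemma Rabs_fst_le_Cmod (c : C) : Rabs (fst c) <= Cmod c.
Proof. by have := Rmax_Cmod c; have := Rmax_l (Rabs (fst c)) (Rabs (snd c)); lra. Qed.

Lemma Rabs_snd_le_Cmod (c : C) : Rabs (snd c) <= Cmod c.
Proof. by have := Rmax_Cmod c; have := Rmax_r (Rabs (fst c)) (Rabs (snd c)); lra. Qed.

Lemma Cmod_le_Rabs_sum (z : C) : Cmod z <= Rabs (fst z) + Rabs (snd z).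
Proof.
case: z => a b; rewrite /Cmod /=.
have Ha := Rabs_pos a; have Hb := Rabs_pos b.
rewrite -(sqrt_square (Rabs a + Rabs b)); last lra.
apply: sqrt_le_1_alt.
rewrite /Rsqr.
have Ea : (a * a = Rabs a * Rabs a)%R by rewrite -Rabs_mult Rabs_pos_eq; nra.
have Eb : (b * b = Rabs b * Rabs b)%R by rewrite -Rabs_mult Rabs_pos_eq; nra.
nra.
Qed.

Lemma Cmod_le_eps_eq0 (c : C) (K : R) : 0 <= K ->
  (forall eps, 0 < eps -> Cmod c <= eps * K) -> c = 0.
Proof.
move=> HK H; apply: Cmod_eq_0.
have H0 := Cmod_ge_0 c.
case: (Req_dec (Cmod c) 0) => // Hn.
have := H (Cmod c / (2 * (K + 1)))%R ltac:(apply: Rdiv_lt_0_compat; lra).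
have -> : (Cmod c / (2 * (K + 1)) * K = Cmod c * (K / (2 * (K + 1))))%R by field; lra.
have : (K / (2 * (K + 1)) < 1)%R.
  apply: (Rmult_lt_reg_r (2 * (K + 1))); first lra.
  rewrite /Rdiv Rmult_assoc Rinv_l; lra.
nra.
Qed.

(** * Complex derivatives *)

Definition is_Cderive (g : C -> C) (q L : C) : Prop :=
  forall eps : R, 0 < eps -> exists d : R, 0 < d /\
    forall u, Cmod (u - q) < d -> Cmod (g u - g q - L * (u - q)) <= eps * Cmod (u - q).

Definition Ccontinuous_at (g : C -> C) (q : C) : Prop :=
  forall eps : R, 0 < eps -> exists d : R, 0 < d /\
    forall u, Cmod (u - q) < d -> Cmod (g u - g q) < eps.

Lemma C_differentiableP (g : C -> C) (q : C) :
  C_differentiable g q <-> exists L, is_Cderive g q L.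
Proof.
split=> [[L HL]|[L HL]]; exists L => eps He; have [d [Hd H]] := HL eps He;
  exists d; split=> //.
- move=> u Hu; have [Euq|Hne] := Ceq_dec u q.
    rewrite Euq; have -> : g q - g q - L * (q - q) = 0 by ring.
    by rewrite Cmod_0; have := Cmod_ge_0 (q - q); nra.
  have := H (u - q) (proj1 (Cmod_gt_0 _) (Cminus_eq_contra _ _ Hne)) Hu.
  by have -> : q + (u - q) = u by ring.
- move=> h Hh0 Hh; have := H (q + h).
  have -> : q + h - q = h by ring.
  exact.
Qed.

Lemma is_Cderive_continuous (g : C -> C) (q L : C) :
  is_Cderive g q L -> Ccontinuous_at g q.
Proof.
move=> HL eps He.
have [d [Hd H]] := HL 1%R Rlt_0_1.
have HL0 := Cmod_ge_0 L.
exists (Rmin d (eps / (Cmod L + 2))); split.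
  by apply: Rmin_pos => //; apply: Rdiv_lt_0_compat; lra.
move=> u Hu.
have [Hu1 Hu2] := Rlt_Rmin Hu.
have E := H u Hu1.
have -> : g u - g q = (g u - g q - L * (u - q)) + L * (u - q) by ring.
apply: Rle_lt_trans; first exact: Cmod_triangle.
rewrite Cmod_mult.
have Hm := Cmod_ge_0 (u - q).
have : Cmod (u - q) * (Cmod L + 2) < eps.
  by rewrite -(Rmult_1_r eps) -(Rinv_l (Cmod L + 2)); [rewrite -Rmult_assoc;
    apply: Rmult_lt_compat_r; lra | lra].
nra.
Qed.

Lemma C_differentiable_continuous (g : C -> C) (q : C) :
  C_differentiable g q -> Ccontinuous_at g q.
Proof. by move/C_differentiableP=> [L /is_Cderive_continuous]. Qed.

Lemma is_Cderive_const (c q : C) : is_Cderive (fun _ => c) q 0.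
Proof.
move=> eps He; exists 1%R; split=> [|u _]; first lra.
have -> : c - c - 0 * (u - q) = 0 by ring.
by rewrite Cmod_0; have := Cmod_ge_0 (u - q); nra.
Qed.

Lemma is_Cderive_id (q : C) : is_Cderive (fun u => u) q 1.
Proof.
move=> eps He; exists 1%R; split=> [|u _]; first lra.
have -> : u - q - 1 * (u - q) = 0 by ring.
by rewrite Cmod_0; have := Cmod_ge_0 (u - q); nra.
Qed.

Lemma is_Cderive_plus (f g : C -> C) (q Lf Lg : C) :
  is_Cderive f q Lf -> is_Cderive g q Lg ->
  is_Cderive (fun u => f u + g u) q (Lf + Lg).
Proof.
move=> Hf Hg eps He.
have [d1 [Hd1 H1]] := Hf (eps / 2)%R ltac:(lra).
have [d2 [Hd2 H2]] := Hg (eps / 2)%R ltac:(lra).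
exists (Rmin d1 d2); split=> [|u /Rlt_Rmin [Hu1 Hu2]]; first exact: Rmin_pos.
have E1 := H1 u Hu1; have E2 := H2 u Hu2.
have -> : f u + g u - (f q + g q) - (Lf + Lg) * (u - q) =
  (f u - f q - Lf * (u - q)) + (g u - g q - Lg * (u - q)) by ring.
by apply: Rle_trans (Cmod_triangle _ _) _; lra.
Qed.

Lemma is_Cderive_scal (c : C) (f : C -> C) (q Lf : C) :
  is_Cderive f q Lf -> is_Cderive (fun u => c * f u) q (c * Lf).
Proof.
move=> Hf eps He.
have Hc := Cmod_ge_0 c.
have [d [Hd H]] := Hf (eps / (Cmod c + 1))%R ltac:(apply: Rdiv_lt_0_compat; lra).
exists d; split=> // u Hu.
have -> : c * f u - c * f q - c * Lf * (u - q) = c * (f u - f q - Lf * (u - q)) by ring.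
rewrite Cmod_mult.
have E := H u Hu; have Hm := Cmod_ge_0 (u - q).
have Hk : Cmod c * (eps / (Cmod c + 1)) <= eps.
  rewrite /Rdiv -Rmult_assoc; apply: (Rmult_le_reg_r (Cmod c + 1)); first lra.
  rewrite Rmult_assoc Rinv_l; lra.
have Hk0 : 0 <= eps / (Cmod c + 1) by apply: Rlt_le; apply: Rdiv_lt_0_compat; lra.
apply: Rle_trans; first exact: Rmult_le_compat_l Hc E.
nra.
Qed.

Lemma is_Cderive_affine (A B q : C) : is_Cderive (fun z => A + B * z) q B.
Proof.
have := is_Cderive_plus (is_Cderive_const A q) (is_Cderive_scal B (is_Cderive_id q)).
by have -> : 0 + B * 1 = B by ring.
Qed.

Lemma is_Cderive_mult (f g : C -> C) (q Lf Lg : C) :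
  is_Cderive f q Lf -> is_Cderive g q Lg ->
  is_Cderive (fun u => f u * g u) q (Lf * g q + f q * Lg).
Proof.
move=> Hf Hg eps He.
set A := (Cmod (g q) + 1)%R; set B := (Cmod (f q) + 1)%R; set K := (Cmod Lf + 1)%R.
have HA : 0 < A by rewrite /A; have := Cmod_ge_0 (g q); lra.
have HB : 0 < B by rewrite /B; have := Cmod_ge_0 (f q); lra.
have HK : 0 < K by rewrite /K; have := Cmod_ge_0 Lf; lra.
have [d1 [Hd1 H1]] := Hf (eps / (3 * A))%R ltac:(apply: Rdiv_lt_0_compat; lra).
have [d2 [Hd2 H2]] := Hg (eps / (3 * B))%R ltac:(apply: Rdiv_lt_0_compat; lra).
have [d3 [Hd3 H3]] := is_Cderive_continuous Hg
  (Rmin_pos 1 (eps / (3 * K)) Rlt_0_1 ltac:(apply: Rdiv_lt_0_compat; lra)).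
exists (Rmin d1 (Rmin d2 d3)); split; first by repeat apply: Rmin_pos.
move=> u /Rlt_Rmin [Hu1 /Rlt_Rmin [Hu2 Hu3]].
have E1 := H1 u Hu1; have E2 := H2 u Hu2.
have [E3a E3b] := Rlt_Rmin (H3 u Hu3).
set m := Cmod (u - q).
have Hm : 0 <= m by apply: Cmod_ge_0.
have -> : f u * g u - f q * g q - (Lf * g q + f q * Lg) * (u - q) =
  (f u - f q - Lf * (u - q)) * g u + (f q * (g u - g q - Lg * (u - q))
  + Lf * (u - q) * (g u - g q)) by ring.
apply: Rle_trans (Cmod_triangle _ _) _.
apply: Rle_trans (Rplus_le_compat_l _ _ _ (Cmod_triangle _ _)) _.
rewrite !Cmod_mult -/m.
have Hgu : Cmod (g u) <= A.
  rewrite /A; have -> : g u = g q + (g u - g q) by ring.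
  by apply: Rle_trans (Cmod_triangle _ _) _; lra.
have T1 : Cmod (f u - f q - Lf * (u - q)) * Cmod (g u) <= eps / (3 * A) * m * A.
  by apply: Rmult_le_compat => //; apply: Cmod_ge_0.
have T2 : Cmod (f q) * Cmod (g u - g q - Lg * (u - q)) <= B * (eps / (3 * B) * m).
  by apply: Rmult_le_compat => //; try apply: Cmod_ge_0; rewrite /B; lra.
have T3 : Cmod Lf * m * Cmod (g u - g q) <= K * m * (eps / (3 * K)).
  apply: Rmult_le_compat; try apply: Cmod_ge_0; try lra.
  - by apply: Rmult_le_pos => //; apply: Cmod_ge_0.
  - by apply: Rmult_le_compat_r => //; rewrite /K; lra.
have X1 : (eps / (3 * A) * m * A = eps / 3 * m)%R by field; lra.
have X2 : (B * (eps / (3 * B) * m) = eps / 3 * m)%R by field; lra.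
have X3 : (K * m * (eps / (3 * K)) = eps / 3 * m)%R by field; lra.
lra.
Qed.

Lemma Ccontinuous_inv (f : C -> C) (q : C) :
  Ccontinuous_at f q -> f q <> 0 -> Ccontinuous_at (fun u => / f u) q.
Proof.
move=> Hf Hq eps He.
set a := Cmod (f q); have Ha : 0 < a by apply/Cmod_gt_0.
have [d [Hd H]] := Hf _ (Rmin_pos (a / 2) (eps * (a * a) / 2) ltac:(lra) ltac:(
  apply: Rdiv_lt_0_compat; [apply: Rmult_lt_0_compat; nra | lra])).
exists d; split=> // u Hu; have [H1 H2] := Rlt_Rmin (H u Hu).
have Hfu : a / 2 <= Cmod (f u).
  have := Cmod_sub_ge (f q) (f q - f u); have -> : f q - (f q - f u) = f u by ring.
  by rewrite Cmod_distC -/a; lra.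
have Hu0 : f u <> 0 by apply/Cmod_gt_0; lra.
have -> : / f u - / f q = (f q - f u) / (f u * f q) by field.
rewrite Cmod_div ?Cmod_mult -/a; last exact: Cmult_neq_0.
apply: (Rmult_lt_reg_r (Cmod (f u) * a)); first nra.
rewrite /Rdiv Rmult_assoc Rinv_l ?Rmult_1_r; last nra.
rewrite Cmod_distC; apply: Rlt_le_trans H2 _.
have -> : (eps * (a * a) / 2 = eps * (a / 2 * a))%R by field.
by apply: Rmult_le_compat_l; [lra | apply: Rmult_le_compat_r; lra].
Qed.

Lemma is_Cderive_inv (f : C -> C) (q Lf : C) : is_Cderive f q Lf -> f q <> 0 ->
  is_Cderive (fun u => / f u) q (- Lf / (f q * f q)).
Proof.
move=> Hf Hq eps He.
set g := fun u => / f u.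
have Hg := Ccontinuous_inv (is_Cderive_continuous Hf) Hq.
set A := (Cmod (g q) + 1)%R; set K := (Cmod Lf * Cmod (g q) + 1)%R.
have HA : 0 < A by rewrite /A; have := Cmod_ge_0 (g q); lra.
have HK : 0 < K by rewrite /K; have := Cmod_ge_0 Lf; have := Cmod_ge_0 (g q); nra.
have [d0 [Hd0 H0]] := is_Cderive_continuous Hf (proj1 (Cmod_gt_0 _) Hq).
have [d1 [Hd1 H1]] := Hf (eps / (2 * A * A))%R ltac:(apply: Rdiv_lt_0_compat; nra).
have [d2 [Hd2 H2]] := Hg _ (Rmin_pos 1 (eps / (2 * K)) Rlt_0_1
  ltac:(apply: Rdiv_lt_0_compat; lra)).
exists (Rmin d0 (Rmin d1 d2)); split=> [|u /Rlt_Rmin [Hu0 /Rlt_Rmin [Hu1 Hu2]]].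
  by repeat apply: Rmin_pos.
have E1 := H1 u Hu1; have [E2a E2b] := Rlt_Rmin (H2 u Hu2).
have Hfu : f u <> 0.
  move=> E; have := H0 u Hu0; rewrite E.
  have -> : 0 - f q = - f q by ring.
  by rewrite Cmod_opp; lra.
have Hgu : Cmod (g u) <= A.
  rewrite /A; have -> : g u = g q + (g u - g q) by ring.
  by apply: Rle_trans (Cmod_triangle _ _) _; apply: Rplus_le_compat_l; apply: Rlt_le.
have -> : / f u - / f q - - Lf / (f q * f q) * (u - q) =
    - g u * g q * (f u - f q - Lf * (u - q)) - Lf * g q * (u - q) * (g u - g q).
  by rewrite /g; field.
set m := Cmod (u - q); have Hm : 0 <= m by apply: Cmod_ge_0.
apply: Rle_trans (Cmod_triangle _ _) _; rewrite Cmod_opp !Cmod_mult Cmod_opp -/m.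
have Hgq : Cmod (g q) <= A by rewrite /A; lra.
have T1 : Cmod (g u) * Cmod (g q) * Cmod (f u - f q - Lf * (u - q))
    <= A * A * (eps / (2 * A * A) * m).
  apply: Rmult_le_compat => //; try apply: Rmult_le_pos; try apply: Cmod_ge_0.
  by apply: Rmult_le_compat => //; apply: Cmod_ge_0.
have T2 : Cmod Lf * Cmod (g q) * m * Cmod (g u - g q) <= K * m * (eps / (2 * K)).
  apply: Rmult_le_compat; try apply: Cmod_ge_0; last exact: Rlt_le.
  - by apply: Rmult_le_pos => //; apply: Rmult_le_pos; apply: Cmod_ge_0.
  - by apply: Rmult_le_compat_r => //; rewrite /K; lra.
have X1 : (A * A * (eps / (2 * A * A) * m) = eps / 2 * m)%R by field; lra.
have X2 : (K * m * (eps / (2 * K)) = eps / 2 * m)%R by field; lra.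
lra.
Qed.

Lemma C_differentiable_const (c q : C) : C_differentiable (fun _ => c) q.
Proof. by apply/C_differentiableP; exists 0; apply: is_Cderive_const. Qed.

Lemma C_differentiable_plus (f g : C -> C) (q : C) :
  C_differentiable f q -> C_differentiable g q -> C_differentiable (fun u => f u + g u) q.
Proof.
move=> /C_differentiableP [Lf Hf] /C_differentiableP [Lg Hg].
by apply/C_differentiableP; eexists; apply: is_Cderive_plus Hf Hg.
Qed.

Lemma C_differentiable_sub_const (f : C -> C) (c q : C) :
  C_differentiable f q -> C_differentiable (fun u => f u - c) q.
Proof. by move=> Hf; apply: C_differentiable_plus Hf (C_differentiable_const _ _). Qed.

Lemma C_differentiable_mult (f g : C -> C) (q : C) :
  C_differentiable f q -> C_differentiable g q -> C_differentiable (fun u => f u * g u) q.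
Proof.
move=> /C_differentiableP [Lf Hf] /C_differentiableP [Lg Hg].
by apply/C_differentiableP; eexists; apply: is_Cderive_mult Hf Hg.
Qed.

Lemma C_differentiable_inv (f : C -> C) (q : C) :
  C_differentiable f q -> f q <> 0 -> C_differentiable (fun u => / f u) q.
Proof.
move=> /C_differentiableP [Lf Hf] Hq.
by apply/C_differentiableP; eexists; apply: is_Cderive_inv Hf Hq.
Qed.

Lemma C_differentiable_inv_sub (p q : C) : q <> p -> C_differentiable (fun z => / (z - p)) q.
Proof.
move=> Hqp; apply: (C_differentiable_inv (f := fun z => z - p)); last exact: Cminus_eq_contra.
by apply: C_differentiable_sub_const; apply/C_differentiableP; exists 1; apply: is_Cderive_id.
Qed.

Lemma C_differentiable_slope (h : C -> C) (p q : C) : C_differentiable h q -> q <> p ->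
  C_differentiable (fun z => (h z - h p) * / (z - p)) q.
Proof.
move=> Hh Hqp; apply: (C_differentiable_mult (f := fun z => h z - h p)).
  exact: C_differentiable_sub_const.
exact: C_differentiable_inv_sub.
Qed.

Lemma slope_bounded_near (h : C -> C) (p : C) : C_differentiable h p ->
  exists M d, 0 < d /\
    forall z, Cmod (z - p) < d -> Cmod ((h z - h p) * / (z - p)) <= M.
Proof.
move=> /C_differentiableP [L HL]; have [d [Hd H]] := HL 1%R Rlt_0_1.
exists (Cmod L + 1)%R, d; split=> // z Hz.
have HL0 := Cmod_ge_0 L.
have [->|Hzp] := Ceq_dec z p.
  have -> : h p - h p = 0 by ring.
  by rewrite Cmult_0_l Cmod_0; lra.
have Hm : 0 < Cmod (z - p) by apply/Cmod_gt_0/Cminus_eq_contra.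
rewrite Cmod_mult Cmod_inv; last exact: Cminus_eq_contra.
have X : Cmod (h z - h p) <= (Cmod L + 1) * Cmod (z - p).
  have -> : h z - h p = (h z - h p - L * (z - p)) + L * (z - p) by ring.
  apply: Rle_trans (Cmod_triangle _ _) _.
  by have := H z Hz; rewrite Cmod_mult; lra.
apply: (Rmult_le_reg_r (Cmod (z - p))) => //.
by rewrite Rmult_assoc Rinv_l; lra.
Qed.

(** * Contour integrals over rectangles *)

Definition CInt (f : R -> C) (a b : R) : C := RInt (V := C_R_CompleteNormedModule) f a b.
Definition ex_CInt (f : R -> C) (a b : R) : Prop := ex_RInt (V := C_R_NormedModule) f a b.

Lemma norm_C_R (x : C) : norm (K := R_AbsRing) (V := C_R_NormedModule) x = Cmod x.
Proof.
case: x => a b; rewrite /norm /= /prod_norm /Cmod /= /norm /= /abs /=.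
by f_equal; rewrite !Rmult_1_r -!Rabs_mult !Rabs_pos_eq //; nra.
Qed.

Lemma CInt_correct (f : R -> C) (a b : R) :
  ex_CInt f a b -> is_RInt (V := C_R_NormedModule) f a b (CInt f a b).
Proof. exact: (RInt_correct (V := C_R_CompleteNormedModule)). Qed.

Lemma is_RInt_CInt (f : R -> C) (a b : R) (l : C) :
  is_RInt (V := C_R_NormedModule) f a b l -> CInt f a b = l.
Proof. exact: (is_RInt_unique (V := C_R_CompleteNormedModule)). Qed.

Lemma norm_CInt_le (f : R -> C) (a b M : R) : a <= b -> ex_CInt f a b ->
  (forall t, a <= t <= b -> Cmod (f t) <= M) -> Cmod (CInt f a b) <= (b - a) * M.
Proof.
move=> Hab Hex HM; rewrite -norm_C_R.
apply: (norm_RInt_le_const (V := C_R_NormedModule) f) => //; last exact: CInt_correct.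
by move=> t Ht; rewrite norm_C_R; apply: HM.
Qed.

Lemma CInt_plus (f g : R -> C) (a b : R) : ex_CInt f a b -> ex_CInt g a b ->
  CInt (fun t => f t + g t) a b = CInt f a b + CInt g a b.
Proof. exact: (RInt_plus (V := C_R_CompleteNormedModule)). Qed.

Lemma CInt_minus (f g : R -> C) (a b : R) : ex_CInt f a b -> ex_CInt g a b ->
  CInt (fun t => f t - g t) a b = CInt f a b - CInt g a b.
Proof. exact: (RInt_minus (V := C_R_CompleteNormedModule)). Qed.

Lemma ex_CInt_plus (f g : R -> C) (a b : R) : ex_CInt f a b -> ex_CInt g a b ->
  ex_CInt (fun t => f t + g t) a b.
Proof. exact: (ex_RInt_plus (V := C_R_NormedModule)). Qed.

Lemma ex_CInt_minus (f g : R -> C) (a b : R) : ex_CInt f a b -> ex_CInt g a b ->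
  ex_CInt (fun t => f t - g t) a b.
Proof. exact: (ex_RInt_minus (V := C_R_NormedModule)). Qed.

(* [C] is only a real module here, so complex scaling is rebuilt from the real
   and imaginary parts. *)
Lemma is_RInt_Cscal (f : R -> C) (a b : R) (I c : C) :
  is_RInt (V := C_R_NormedModule) f a b I ->
  is_RInt (V := C_R_NormedModule) (fun t => c * f t) a b (c * I).
Proof.
move=> H.
have H1 := is_RInt_fct_extend_fst _ _ _ _ H.
have H2 := is_RInt_fct_extend_snd _ _ _ _ H.
case: c => c1 c2; case: I H H1 H2 => I1 I2 H H1 H2 /=.
apply: (is_RInt_fct_extend_pair _ _ _ (c1 * I1 - c2 * I2)%R (c1 * I2 + c2 * I1)%R).
- apply: is_RInt_ext (is_RInt_minus _ _ _ _ _ _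
    (is_RInt_scal _ _ _ c1 _ H1) (is_RInt_scal _ _ _ c2 _ H2)).
  by [].
- apply: is_RInt_ext (is_RInt_plus _ _ _ _ _ _
    (is_RInt_scal _ _ _ c1 _ H2) (is_RInt_scal _ _ _ c2 _ H1)).
  by [].
Qed.

Lemma ex_CInt_scal (f : R -> C) (a b : R) (c : C) :
  ex_CInt f a b -> ex_CInt (fun t => c * f t) a b.
Proof. by move=> H; eexists; apply: is_RInt_Cscal; apply: CInt_correct. Qed.

Lemma CInt_scal (f : R -> C) (a b : R) (c : C) :
  ex_CInt f a b -> CInt (fun t => c * f t) a b = c * CInt f a b.
Proof. by move=> H; apply: is_RInt_CInt; apply: is_RInt_Cscal; apply: CInt_correct. Qed.

Lemma ex_CInt_const (a b : R) (c : C) : ex_CInt (fun _ => c) a b.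
Proof. exact: (ex_RInt_const (V := C_R_NormedModule)). Qed.

Lemma CInt_const (a b : R) (c : C) : CInt (fun _ => c) a b = c * RtoC (b - a).
Proof.
rewrite /CInt (RInt_const (V := C_R_CompleteNormedModule)).
by case: c => x y; apply: C_ext; rewrite /scal /= /prod_scal /= /scal /= /mult /=; ring.
Qed.

Lemma is_RInt_RtoC (a b : R) :
  is_RInt (V := C_R_NormedModule) (fun t => RtoC t) a b (RtoC ((b * b - a * a) / 2)).
Proof.
apply: is_RInt_fct_extend_pair => /=.
- have -> : ((b * b - a * a) / 2)%R =
      minus ((fun t : R => (t * t / 2)%R) b) ((fun t : R => (t * t / 2)%R) a).
    by rewrite /minus /plus /opp /=; field.
  apply: (is_RInt_derive (fun t : R => (t * t / 2)%R) (fun t : R => t)) => x _.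
    by auto_derive => //; field.
  exact: continuous_id.
- by have := is_RInt_const a b 0%R; rewrite /scal /= /mult /= Rmult_0_r.
Qed.

Lemma CInt_affine (u v : C) (a b : R) :
  CInt (fun t => u + v * RtoC t) a b = u * RtoC (b - a) + v * RtoC ((b * b - a * a) / 2).
Proof.
have ex_id : ex_CInt (fun t => RtoC t) a b by eexists; apply: is_RInt_RtoC.
rewrite CInt_plus; [|exact: ex_CInt_const|exact: ex_CInt_scal].
by rewrite CInt_const CInt_scal // (is_RInt_CInt (@is_RInt_RtoC a b)).
Qed.

Lemma ex_CInt_path (g : C -> C) (p : R -> C) (a b : R) : a <= b ->
  (forall t0 t, Cmod (p t - p t0) <= Rabs (t - t0)) ->
  (forall t, a <= t <= b -> Ccontinuous_at g (p t)) -> ex_CInt (fun t => g (p t)) a b.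
Proof.
move=> Hab Hp Hc; apply: (ex_RInt_continuous (V := C_R_CompleteNormedModule)).
move=> t0; rewrite Rmin_left // Rmax_right // => Ht0.
apply/filterlim_locally => eps.
have [d [Hd H]] := Hc t0 Ht0 eps (cond_pos eps).
exists (mkposreal d Hd) => t Ht.
have := H (p t) (Rle_lt_trans _ _ _ (Hp t0 t) Ht).
case: (g (p t)) => [x1 y1]; case: (g (p t0)) => [x0 y0] Hm.
have := Rmax_Cmod ((x1, y1) - (x0, y0)); rewrite /= => Hm2.
split; rewrite /ball /= /AbsRing_ball /abs /minus /plus /opp /=; apply: Rle_lt_trans Hm;
  apply: Rle_trans Hm2; [apply: Rmax_l | apply: Rmax_r].
Qed.

Lemma ex_CInt_horizontal (g : C -> C) (y a b : R) : a <= b ->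
  (forall t, a <= t <= b -> Ccontinuous_at g (t, y)) -> ex_CInt (fun t => g (t, y)) a b.
Proof.
move=> Hab Hc; apply: (@ex_CInt_path g (fun t => (t, y))) => // t0 t.
have -> : ((t, y) - (t0, y) : C) = RtoC (t - t0) by apply: C_ext => /=; ring.
by rewrite Cmod_R; lra.
Qed.

Lemma ex_CInt_vertical (g : C -> C) (x a b : R) : a <= b ->
  (forall t, a <= t <= b -> Ccontinuous_at g (x, t)) -> ex_CInt (fun t => g (x, t)) a b.
Proof.
move=> Hab Hc; apply: (@ex_CInt_path g (fun t => (x, t))) => // t0 t.
have -> : ((x, t) - (x, t0) : C) = Ci * RtoC (t - t0) by apply: C_ext => /=; ring.
by rewrite Cmod_mult Cmod_Ci Cmod_R; lra.
Qed.

Record rect := Rect { rx0 : R; rx1 : R; ry0 : R; ry1 : R }.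

Definition in_rect (r : rect) (z : C) : Prop :=
  rx0 r <= fst z <= rx1 r /\ ry0 r <= snd z <= ry1 r.

Definition on_boundary (r : rect) (z : C) : Prop :=
  (rx0 r <= fst z <= rx1 r /\ (snd z = ry0 r \/ snd z = ry1 r)) \/
  (ry0 r <= snd z <= ry1 r /\ (fst z = rx0 r \/ fst z = rx1 r)).

Definition sub_rect (r' r : rect) : Prop :=
  rx0 r <= rx0 r' /\ rx0 r' <= rx1 r' /\ rx1 r' <= rx1 r /\
  ry0 r <= ry0 r' /\ ry0 r' <= ry1 r' /\ ry1 r' <= ry1 r.

Definition contour (g : C -> C) (r : rect) : C :=
  CInt (fun t => g (t, ry0 r)) (rx0 r) (rx1 r)
  + Ci * CInt (fun t => g (rx1 r, t)) (ry0 r) (ry1 r)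
  - CInt (fun t => g (t, ry1 r)) (rx0 r) (rx1 r)
  - Ci * CInt (fun t => g (rx0 r, t)) (ry0 r) (ry1 r).

Definition ex_contour (g : C -> C) (r : rect) : Prop :=
  ex_CInt (fun t => g (t, ry0 r)) (rx0 r) (rx1 r) /\
  ex_CInt (fun t => g (t, ry1 r)) (rx0 r) (rx1 r) /\
  ex_CInt (fun t => g (rx0 r, t)) (ry0 r) (ry1 r) /\
  ex_CInt (fun t => g (rx1 r, t)) (ry0 r) (ry1 r).

Lemma on_boundary_in_rect (r : rect) (z : C) :
  rx0 r <= rx1 r -> ry0 r <= ry1 r -> on_boundary r z -> in_rect r z.
Proof. by rewrite /in_rect => ? ? [[? [->|->]]|[? [->|->]]]; lra. Qed.

Lemma in_sub_rect (r r' : rect) (z : C) : sub_rect r' r -> in_rect r' z -> in_rect r z.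
Proof. by rewrite /sub_rect /in_rect; lra. Qed.

Lemma sub_rect_refl (r : rect) : rx0 r <= rx1 r -> ry0 r <= ry1 r -> sub_rect r r.
Proof. by rewrite /sub_rect; lra. Qed.

Lemma sub_rect_trans (r1 r2 r3 : rect) : sub_rect r1 r2 -> sub_rect r2 r3 -> sub_rect r1 r3.
Proof. by rewrite /sub_rect; lra. Qed.

Lemma ex_contour_continuous (g : C -> C) (r : rect) : rx0 r <= rx1 r -> ry0 r <= ry1 r ->
  (forall z, on_boundary r z -> Ccontinuous_at g z) -> ex_contour g r.
Proof.
move=> Hx Hy H; split; [|split; [|split]].
- by apply: ex_CInt_horizontal => // t Ht; apply: H; left; split=> //; left.
- by apply: ex_CInt_horizontal => // t Ht; apply: H; left; split=> //; right.
- by apply: ex_CInt_vertical => // t Ht; apply: H; right; split=> //; left.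
- by apply: ex_CInt_vertical => // t Ht; apply: H; right; split=> //; right.
Qed.

Lemma ex_contour_plus (f g : C -> C) (r : rect) : ex_contour f r -> ex_contour g r ->
  ex_contour (fun z => f z + g z) r.
Proof.
by move=> [F1 [F2 [F3 F4]]] [G1 [G2 [G3 G4]]]; split; [|split; [|split]];
  apply: ex_CInt_plus.
Qed.

Lemma ex_contour_minus (f g : C -> C) (r : rect) : ex_contour f r -> ex_contour g r ->
  ex_contour (fun z => f z - g z) r.
Proof.
by move=> [F1 [F2 [F3 F4]]] [G1 [G2 [G3 G4]]]; split; [|split; [|split]];
  apply: ex_CInt_minus.
Qed.

Lemma ex_contour_scal (c : C) (f : C -> C) (r : rect) :
  ex_contour f r -> ex_contour (fun z => c * f z) r.
Proof. by move=> [F1 [F2 [F3 F4]]]; split; [|split; [|split]]; apply: ex_CInt_scal. Qed.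

Lemma contour_plus (f g : C -> C) (r : rect) : ex_contour f r -> ex_contour g r ->
  contour (fun z => f z + g z) r = contour f r + contour g r.
Proof.
move=> [F1 [F2 [F3 F4]]] [G1 [G2 [G3 G4]]]; rewrite /contour.
by rewrite (CInt_plus F1 G1) (CInt_plus F2 G2) (CInt_plus F3 G3) (CInt_plus F4 G4); ring.
Qed.

Lemma contour_minus (f g : C -> C) (r : rect) : ex_contour f r -> ex_contour g r ->
  contour (fun z => f z - g z) r = contour f r - contour g r.
Proof.
move=> [F1 [F2 [F3 F4]]] [G1 [G2 [G3 G4]]]; rewrite /contour.
by rewrite (CInt_minus F1 G1) (CInt_minus F2 G2) (CInt_minus F3 G3) (CInt_minus F4 G4); ring.
Qed.

Lemma contour_scal (c : C) (f : C -> C) (r : rect) :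
  ex_contour f r -> contour (fun z => c * f z) r = c * contour f r.
Proof.
move=> [F1 [F2 [F3 F4]]]; rewrite /contour.
by rewrite (CInt_scal c F1) (CInt_scal c F2) (CInt_scal c F3) (CInt_scal c F4); ring.
Qed.

Lemma contour_affine (A B : C) (r : rect) : contour (fun z => A + B * z) r = 0.
Proof.
have Eh y : (fun t => A + B * (t, y)) = (fun t => (A + B * (0, y)) + B * RtoC t).
  by apply: functional_extensionality => t; apply: C_ext => /=; ring.
have Ev x : (fun t => A + B * (x, t)) = (fun t => (A + B * (x, 0)) + (B * Ci) * RtoC t).
  by apply: functional_extensionality => t; apply: C_ext => /=; ring.
rewrite /contour !Eh !Ev !CInt_affine.
by apply: C_ext => /=; field.
Qed.

Lemma norm_contour_le (g : C -> C) (r : rect) (M : R) :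
  rx0 r <= rx1 r -> ry0 r <= ry1 r -> ex_contour g r ->
  (forall z, on_boundary r z -> Cmod (g z) <= M) ->
  Cmod (contour g r) <= 2 * ((rx1 r - rx0 r) + (ry1 r - ry0 r)) * M.
Proof.
move=> Hx Hy [F1 [F2 [F3 F4]]] HM; rewrite /contour.
have B1 := norm_CInt_le Hx F1 (fun t Ht => HM (t, ry0 r) ltac:(left; simpl; tauto)).
have B2 := norm_CInt_le Hx F2 (fun t Ht => HM (t, ry1 r) ltac:(left; simpl; tauto)).
have B3 := norm_CInt_le Hy F3 (fun t Ht => HM (rx0 r, t) ltac:(right; simpl; tauto)).
have B4 := norm_CInt_le Hy F4 (fun t Ht => HM (rx1 r, t) ltac:(right; simpl; tauto)).
set a := CInt _ (rx0 r) _ in B1 *; set b := CInt _ (ry0 r) _ in B4 *.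
set c := CInt _ (rx0 r) _ in B2 *; set d := CInt _ (ry0 r) _ in B3 *.
have -> : a + Ci * b - c - Ci * d = (a + Ci * b) + (- c + - (Ci * d)) by ring.
apply: Rle_trans (Cmod_triangle _ _) _.
have := Cmod_triangle a (Ci * b); have := Cmod_triangle (- c) (- (Ci * d)).
by rewrite !Cmod_opp !Cmod_mult Cmod_Ci; lra.
Qed.

Lemma contour_splitx (g : C -> C) (x0 x1 x2 y0 y1 : R) :
  ex_CInt (fun t => g (t, y0)) x0 x1 -> ex_CInt (fun t => g (t, y0)) x1 x2 ->
  ex_CInt (fun t => g (t, y1)) x0 x1 -> ex_CInt (fun t => g (t, y1)) x1 x2 ->
  contour g (Rect x0 x2 y0 y1) = contour g (Rect x0 x1 y0 y1) + contour g (Rect x1 x2 y0 y1).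
Proof.
move=> H1 H2 H3 H4; rewrite /contour /CInt /=.
rewrite -(RInt_Chasles (V := C_R_CompleteNormedModule) _ _ _ _ H1 H2).
rewrite -(RInt_Chasles (V := C_R_CompleteNormedModule) _ _ _ _ H3 H4).
set A := RInt _ x0 x1; set B := RInt _ x1 x2; set A' := RInt _ x0 x1; set B' := RInt _ x1 x2.
by change (plus A B) with (A + B); change (plus A' B') with (A' + B'); ring.
Qed.

Lemma contour_splity (g : C -> C) (x0 x1 y0 y1 y2 : R) :
  ex_CInt (fun t => g (x0, t)) y0 y1 -> ex_CInt (fun t => g (x0, t)) y1 y2 ->
  ex_CInt (fun t => g (x1, t)) y0 y1 -> ex_CInt (fun t => g (x1, t)) y1 y2 ->
  contour g (Rect x0 x1 y0 y2) = contour g (Rect x0 x1 y0 y1) + contour g (Rect x0 x1 y1 y2).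
Proof.
move=> H1 H2 H3 H4; rewrite /contour /CInt /=.
rewrite -(RInt_Chasles (V := C_R_CompleteNormedModule) _ _ _ _ H1 H2).
rewrite -(RInt_Chasles (V := C_R_CompleteNormedModule) _ _ _ _ H3 H4).
set A := RInt _ y0 y1; set B := RInt _ y1 y2; set A' := RInt _ y0 y1; set B' := RInt _ y1 y2.
by change (plus A B) with (A + B); change (plus A' B') with (A' + B'); ring.
Qed.

(** * Goursat's theorem *)

Definition quarter (right top : bool) (r : rect) : rect :=
  let mx := ((rx0 r + rx1 r) / 2)%R in
  let my := ((ry0 r + ry1 r) / 2)%R in
  Rect (if right then mx else rx0 r) (if right then rx1 r else mx)
       (if top then my else ry0 r) (if top then ry1 r else my).

Lemma quarter_spec (i j : bool) (r : rect) : rx0 r <= rx1 r -> ry0 r <= ry1 r ->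
  sub_rect (quarter i j r) r /\
  (rx1 (quarter i j r) - rx0 (quarter i j r) = (rx1 r - rx0 r) / 2)%R /\
  (ry1 (quarter i j r) - ry0 (quarter i j r) = (ry1 r - ry0 r) / 2)%R.
Proof. by rewrite /sub_rect; case: i; case: j => /= Hx Hy; repeat split; lra. Qed.

Definition continuous_on_rect (g : C -> C) (r : rect) : Prop :=
  forall z, in_rect r z -> Ccontinuous_at g z.

Lemma contour_quarters (g : C -> C) (r : rect) :
  rx0 r <= rx1 r -> ry0 r <= ry1 r -> continuous_on_rect g r ->
  contour g r = contour g (quarter false false r) + contour g (quarter true false r)
              + contour g (quarter false true r) + contour g (quarter true true r).
Proof.
case: r => x0 x1 y0 y1 /= Hx Hy Hc; rewrite /quarter /=.
set mx := ((x0 + x1) / 2)%R; set my := ((y0 + y1) / 2)%R.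
have Hh y a b : y0 <= y <= y1 -> x0 <= a -> a <= b -> b <= x1 ->
    ex_CInt (fun t => g (t, y)) a b.
  by move=> *; apply: ex_CInt_horizontal => // t Ht; apply: Hc; rewrite /in_rect /=; lra.
have Hv x a b : x0 <= x <= x1 -> y0 <= a -> a <= b -> b <= y1 ->
    ex_CInt (fun t => g (x, t)) a b.
  by move=> *; apply: ex_CInt_vertical => // t Ht; apply: Hc; rewrite /in_rect /=; lra.
rewrite (@contour_splity g x0 x1 y0 my y1); try (apply: Hv; rewrite /mx /my; lra).
rewrite (@contour_splitx g x0 mx x1 y0 my); try (apply: Hh; rewrite /mx /my; lra).
rewrite (@contour_splitx g x0 mx x1 my y1); try (apply: Hh; rewrite /mx /my; lra).
ring.
Qed.

Definition larger_contour (g : C -> C) (r1 r2 : rect) : rect :=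
  if Rle_dec (Cmod (contour g r1)) (Cmod (contour g r2)) then r2 else r1.

Definition worst_quarter (g : C -> C) (r : rect) : rect :=
  larger_contour g (larger_contour g (quarter false false r) (quarter true false r))
                   (larger_contour g (quarter false true r) (quarter true true r)).

Lemma larger_contour_ge (g : C -> C) (r1 r2 : rect) :
  Cmod (contour g r1) <= Cmod (contour g (larger_contour g r1 r2)) /\
  Cmod (contour g r2) <= Cmod (contour g (larger_contour g r1 r2)).
Proof.
by rewrite /larger_contour; case: Rle_dec => H /=; [|have := Rnot_le_lt _ _ H]; split; lra.
Qed.

Lemma worst_quarterP (g : C -> C) (r : rect) : exists i j, worst_quarter g r = quarter i j r.
Proof.
have L r1 r2 : larger_contour g r1 r2 = r1 \/ larger_contour g r1 r2 = r2.
  by rewrite /larger_contour; case: Rle_dec; tauto.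
rewrite /worst_quarter.
case: (L (larger_contour g (quarter false false r) (quarter true false r))
         (larger_contour g (quarter false true r) (quarter true true r))) => ->;
  [case: (L (quarter false false r) (quarter true false r))
  |case: (L (quarter false true r) (quarter true true r))] => ->; by do 2 eexists.
Qed.

Lemma contour_le_worst_quarter (g : C -> C) (r : rect) :
  rx0 r <= rx1 r -> ry0 r <= ry1 r -> continuous_on_rect g r ->
  Cmod (contour g r) <= 4 * Cmod (contour g (worst_quarter g r)).
Proof.
move=> Hx Hy Hc; rewrite (contour_quarters Hx Hy Hc) /worst_quarter.
have [A1 A2] := larger_contour_ge g (quarter false false r) (quarter true false r).
have [B1 B2] := larger_contour_ge g (quarter false true r) (quarter true true r).
have [C1 C2] := larger_contour_ge g
  (larger_contour g (quarter false false r) (quarter true false r))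
  (larger_contour g (quarter false true r) (quarter true true r)).
move: A1 A2 B1 B2 C1 C2.
set a := contour g (quarter false false r); set b := contour g (quarter true false r).
set c := contour g (quarter false true r); set d := contour g (quarter true true r).
have := Cmod_triangle (a + b + c) d; have := Cmod_triangle (a + b) c.
have := Cmod_triangle a b.
lra.
Qed.

Lemma worst_quarter_spec (g : C -> C) (r : rect) : rx0 r <= rx1 r -> ry0 r <= ry1 r ->
  sub_rect (worst_quarter g r) r /\
  (rx1 (worst_quarter g r) - rx0 (worst_quarter g r) = (rx1 r - rx0 r) / 2)%R /\
  (ry1 (worst_quarter g r) - ry0 (worst_quarter g r) = (ry1 r - ry0 r) / 2)%R.
Proof. by move=> Hx Hy; have [i [j ->]] := worst_quarterP g r; apply: quarter_spec. Qed.

Section Bisection.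

Variables (g : C -> C) (r : rect).
Hypotheses (Hx : rx0 r <= rx1 r) (Hy : ry0 r <= ry1 r) (Hc : continuous_on_rect g r).

Definition bisect (m : nat) : rect := iter m (worst_quarter g) r.

Lemma bisect_spec (m : nat) :
  sub_rect (bisect m) r /\
  (rx1 (bisect m) - rx0 (bisect m) = (rx1 r - rx0 r) * (/ 2) ^ m)%R /\
  (ry1 (bisect m) - ry0 (bisect m) = (ry1 r - ry0 r) * (/ 2) ^ m)%R.
Proof.
elim: m => [|m [IH1 [IH2 IH3]]].
  by rewrite /bisect /=; split; [apply: sub_rect_refl | split; ring].
have [Hx' Hy'] : rx0 (bisect m) <= rx1 (bisect m) /\ ry0 (bisect m) <= ry1 (bisect m).
  by move: IH1; rewrite /sub_rect; lra.
have [S1 [S2 S3]] := worst_quarter_spec g Hx' Hy'.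
rewrite /bisect iterS -/(bisect m) S2 S3 IH2 IH3 /=.
by split; [exact: sub_rect_trans S1 IH1 | split; field].
Qed.

Lemma bisect_proper (m : nat) :
  rx0 (bisect m) <= rx1 (bisect m) /\ ry0 (bisect m) <= ry1 (bisect m).
Proof. by have [S _] := bisect_spec m; move: S; rewrite /sub_rect; lra. Qed.

Lemma bisect_nested (k m : nat) : (k <= m)%N -> sub_rect (bisect m) (bisect k).
Proof.
elim: m => [|m IH].
  by rewrite leqn0 => /eqP ->; have [? ?] := bisect_proper 0; apply: sub_rect_refl.
rewrite leq_eqVlt => /orP [/eqP ->|Hk].
  by have [? ?] := bisect_proper m.+1; apply: sub_rect_refl.
have [Hx' Hy'] := bisect_proper m.
have [S _] := worst_quarter_spec g Hx' Hy'.
by rewrite /bisect iterS -/(bisect m); apply: sub_rect_trans S (IH Hk).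
Qed.

Lemma bisect_contour_ge (m : nat) :
  Cmod (contour g r) * ((/ 2) ^ m * (/ 2) ^ m) <= Cmod (contour g (bisect m)).
Proof.
elim: m => [|m IH]; first by rewrite /bisect /=; lra.
have [S _] := bisect_spec m; have [Hx' Hy'] := bisect_proper m.
have H4 := contour_le_worst_quarter Hx' Hy' (fun z Hz => Hc (in_sub_rect S Hz)).
have Hp : 0 <= (/ 2) ^ m by apply: pow_le; lra.
change (bisect m.+1) with (worst_quarter g (bisect m)).
change ((/ 2) ^ m.+1)%R with (/ 2 * (/ 2) ^ m)%R.
nra.
Qed.

Lemma bisect_common_point : exists q : C, forall m, in_rect (bisect m) q.
Proof.
have cross k m : rx0 (bisect k) <= rx1 (bisect m) /\ ry0 (bisect k) <= ry1 (bisect m).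
  by case: (leqP k m) => [/bisect_nested | /ltnW /bisect_nested]; rewrite /sub_rect; lra.
have Bx : bound (fun x => exists k, x = rx0 (bisect k)).
  by exists (rx1 r) => x [k ->]; have [H _] := cross k 0%N; exact: H.
have By : bound (fun y => exists k, y = ry0 (bisect k)).
  by exists (ry1 r) => y [k ->]; have [_ H] := cross k 0%N; exact: H.
have [qx [Ux Lx]] := completeness _ Bx (ex_intro _ (rx0 r) (ex_intro _ 0%N erefl)).
have [qy [Uy Ly]] := completeness _ By (ex_intro _ (ry0 r) (ex_intro _ 0%N erefl)).
exists (qx, qy) => m; rewrite /in_rect /=; split; split.
- by apply: Ux; exists m.
- by apply: Lx => x [k ->]; have [H _] := cross k m.
- by apply: Uy; exists m.
- by apply: Ly => y [k ->]; have [_ H] := cross k m.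
Qed.

End Bisection.

Lemma in_rect_dist_le (r : rect) (z q : C) : in_rect r z -> in_rect r q ->
  Cmod (z - q) <= (rx1 r - rx0 r) + (ry1 r - ry0 r).
Proof.
move=> Hz Hq; apply: Rle_trans (Cmod_le_Rabs_sum _) _.
move: Hz Hq; rewrite /in_rect => Hz Hq.
by apply: Rplus_le_compat; apply: Rabs_le; simpl; lra.
Qed.

Lemma norm_contour_le_linearization (g : C -> C) (r : rect) (q L : C) (eps rho : R) :
  rx0 r <= rx1 r -> ry0 r <= ry1 r -> continuous_on_rect g r -> 0 <= eps ->
  (forall z, in_rect r z -> Cmod (z - q) <= rho) ->
  (forall z, in_rect r z -> Cmod (g z - g q - L * (z - q)) <= eps * Cmod (z - q)) ->
  Cmod (contour g r) <= 2 * ((rx1 r - rx0 r) + (ry1 r - ry0 r)) * (eps * rho).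
Proof.
move=> Hx Hy Hc He Hrho Hlin.
set l := fun z => (g q - L * q) + L * z.
have Eg : ex_contour g r.
  by apply: ex_contour_continuous => // z Hz; apply: Hc; apply: on_boundary_in_rect.
have El : ex_contour l r.
  apply: ex_contour_continuous => // z _.
  exact: is_Cderive_continuous (is_Cderive_affine _ _ _).
have -> : contour g r = contour (fun z => g z - l z) r.
  by rewrite (contour_minus Eg El) /l contour_affine; ring.
apply: norm_contour_le => //; first exact: ex_contour_minus.
move=> z /(on_boundary_in_rect Hx Hy) Hz.
have -> : g z - l z = g z - g q - L * (z - q) by rewrite /l; ring.
by apply: Rle_trans (Hlin z Hz) _; apply: Rmult_le_compat_l => //; apply: Hrho.
Qed.

(* The worst quarters shrink to a point [q]; on the [N]-th one, [g] is affine up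
   to [eps |z - q|], so its contour integral is [O(eps 4^-N)], while it is at least
   [4^-N] times the contour integral over [r]. *)
Theorem goursat (g : C -> C) (r : rect) : rx0 r <= rx1 r -> ry0 r <= ry1 r ->
  (forall z, in_rect r z -> C_differentiable g z) -> contour g r = 0.
Proof.
move=> Hx Hy Hd.
have Hc : continuous_on_rect g r by move=> z /Hd /C_differentiable_continuous.
have [q Hq] := bisect_common_point g Hx Hy.
set w := (rx1 r - rx0 r)%R; set h := (ry1 r - ry0 r)%R.
have Hw : 0 <= w by rewrite /w; lra.
have Hh : 0 <= h by rewrite /h; lra.
apply: (@Cmod_le_eps_eq0 _ (2 * ((w + h) * (w + h)))%R); first nra.
move=> eps He.
have [L HL] := proj1 (C_differentiableP _ _) (Hd q (Hq 0%N)).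
have [del [Hdel Hlin]] := HL eps He.
have [N HN] := pow_lt_1_zero (/ 2) ltac:(rewrite Rabs_pos_eq; lra) (del / (w + h + 1))
  ltac:(apply: Rdiv_lt_0_compat; lra).
have := HN N (Nat.le_refl N); set s := ((/ 2) ^ N)%R => HsN.
have Hs : 0 < s by apply: pow_lt; lra.
rewrite Rabs_pos_eq in HsN; last lra.
have Hws : (w + h) * s < del.
  have : (w + h + 1) * s < del.
    have -> : del = ((del / (w + h + 1)) * (w + h + 1))%R by field; lra.
    by rewrite Rmult_comm; apply: Rmult_lt_compat_r; lra.
  nra.
have [S1 [S2 S3]] := bisect_spec g Hx Hy N.
set rm := bisect g r N in S1 S2 S3.
have [Hxm Hym] : rx0 rm <= rx1 rm /\ ry0 rm <= ry1 rm by move: S1; rewrite /sub_rect; lra.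
have Hnear z : in_rect rm z -> Cmod (z - q) <= (w + h) * s.
  by move=> Hz; have := in_rect_dist_le Hz (Hq N); rewrite S2 S3 -/w -/h -/s; lra.
have B := norm_contour_le_linearization Hxm Hym (fun z Hz => Hc z (in_sub_rect S1 Hz))
  (Rlt_le _ _ He) Hnear (fun z Hz => Hlin z (Rle_lt_trans _ _ _ (Hnear z Hz) Hws)).
rewrite S2 S3 -/w -/h -/s in B.
have G := bisect_contour_ge Hx Hy Hc N; rewrite -/s -/rm in G.
apply: (Rmult_le_reg_r (s * s)); first nra.
nra.
Qed.

(** * A Cauchy estimate *)

Definition square (p : C) (del : R) : rect :=
  Rect (fst p - del) (fst p + del) (snd p - del) (snd p + del).

Lemma square_dist_le (p z : C) (del : R) : in_rect (square p del) z -> Cmod (z - p) <= 2 * del.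
Proof.
rewrite /in_rect /square /= => Hz; apply: Rle_trans (Cmod_le_Rabs_sum _) _.
change (Rabs (fst z - fst p) + Rabs (snd z - snd p) <= 2 * del).
by have := Rabs_le (fst z - fst p) del; have := Rabs_le (snd z - snd p) del; lra.
Qed.

Lemma contour_excise (g : C -> C) (r : rect) (p : C) (del : R) : 0 < del ->
  rx0 r < fst p - del -> fst p + del < rx1 r -> ry0 r < snd p - del -> snd p + del < ry1 r ->
  (forall z, in_rect r z -> z <> p -> C_differentiable g z) ->
  contour g r = contour g (square p del).
Proof.
case: r => x0 x3 y0 y3 /=; case: p => px py; rewrite /square /= => Hdel Hx1 Hx2 Hy1 Hy2 Hd.
set x1 := (px - del)%R; set x2 := (px + del)%R; set y1 := (py - del)%R; set y2 := (py + del)%R.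
have Hc z : in_rect (Rect x0 x3 y0 y3) z -> z <> (px, py) -> Ccontinuous_at g z.
  by move=> Hz Hzp; apply: C_differentiable_continuous; apply: Hd.
have Eh y a b : y0 <= y <= y3 -> y <> py -> x0 <= a -> a <= b -> b <= x3 ->
    ex_CInt (fun t => g (t, y)) a b.
  move=> Hy Hyp Ha Hab Hb; apply: ex_CInt_horizontal => // t Ht.
  by apply: Hc; [rewrite /in_rect /=; lra | case].
have Ev x a b : x0 <= x <= x3 -> x <> px -> y0 <= a -> a <= b -> b <= y3 ->
    ex_CInt (fun t => g (x, t)) a b.
  move=> Hx Hxp Ha Hab Hb; apply: ex_CInt_vertical => // t Ht.
  by apply: Hc; [rewrite /in_rect /=; lra | case].
have Z r' : sub_rect r' (Rect x0 x3 y0 y3) ->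
    rx1 r' < px \/ px < rx0 r' \/ ry1 r' < py \/ py < ry0 r' -> contour g r' = 0.
  move=> Hs Hsep; have [Hx Hy] : rx0 r' <= rx1 r' /\ ry0 r' <= ry1 r'.
    by move: Hs; rewrite /sub_rect; lra.
  apply: goursat => // z Hz; apply: Hd; first exact: in_sub_rect Hs Hz.
  by move=> E; move: Hz; rewrite E /in_rect /=; case: Hsep => [|[|[|]]]; lra.
have Zl : contour g (Rect x0 x1 y0 y3) = 0.
  by apply: Z; rewrite /sub_rect /x1 /=; [lra | left; lra].
have Zr : contour g (Rect x2 x3 y0 y3) = 0.
  by apply: Z; rewrite /sub_rect /x2 /=; [lra | right; left; lra].
have Zb : contour g (Rect x1 x2 y0 y1) = 0.
  by apply: Z; rewrite /sub_rect /x1 /x2 /y1 /=; [lra | right; right; left; lra].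
have Zt : contour g (Rect x1 x2 y2 y3) = 0.
  by apply: Z; rewrite /sub_rect /x1 /x2 /y2 /=; [lra | right; right; right; lra].
rewrite (@contour_splitx g x0 x1 x3 y0 y3); try (apply: Eh; rewrite /x1; lra).
rewrite (@contour_splitx g x1 x2 x3 y0 y3); try (apply: Eh; rewrite /x1 /x2; lra).
rewrite (@contour_splity g x1 x2 y0 y1 y3); try (apply: Ev; rewrite /x1 /x2 /y1; lra).
rewrite (@contour_splity g x1 x2 y1 y2 y3); try (apply: Ev; rewrite /x1 /x2 /y1 /y2; lra).
by rewrite Zl Zr Zb Zt; ring.
Qed.

Theorem contour_punctured (g : C -> C) (r : rect) (p : C) :
  rx0 r < fst p < rx1 r -> ry0 r < snd p < ry1 r ->
  (forall z, in_rect r z -> z <> p -> C_differentiable g z) ->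
  (exists M d, 0 < d /\ forall z, Cmod (z - p) < d -> Cmod (g z) <= M) ->
  contour g r = 0.
Proof.
move=> Hpx Hpy Hd [M [d [Hd0 HM]]].
apply: (@Cmod_le_eps_eq0 _ (8 * Rabs M)%R); first by have := Rabs_pos M; lra.
move=> eps He.
set del := Rmin (Rmin eps (d / 4)) (Rmin (Rmin ((fst p - rx0 r) / 2) ((rx1 r - fst p) / 2))
                                        (Rmin ((snd p - ry0 r) / 2) ((ry1 r - snd p) / 2))).
have Hdel : 0 < del by rewrite /del; repeat apply: Rmin_pos; lra.
have D1 : del <= eps := Rle_trans _ _ _ (Rmin_l _ _) (Rmin_l _ _).
have D2 : del <= d / 4 := Rle_trans _ _ _ (Rmin_l _ _) (Rmin_r _ _).
have D3 : del <= (fst p - rx0 r) / 2 :=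
  Rle_trans _ _ _ (Rmin_r _ _) (Rle_trans _ _ _ (Rmin_l _ _) (Rmin_l _ _)).
have D4 : del <= (rx1 r - fst p) / 2 :=
  Rle_trans _ _ _ (Rmin_r _ _) (Rle_trans _ _ _ (Rmin_l _ _) (Rmin_r _ _)).
have D5 : del <= (snd p - ry0 r) / 2 :=
  Rle_trans _ _ _ (Rmin_r _ _) (Rle_trans _ _ _ (Rmin_r _ _) (Rmin_l _ _)).
have D6 : del <= (ry1 r - snd p) / 2 :=
  Rle_trans _ _ _ (Rmin_r _ _) (Rle_trans _ _ _ (Rmin_r _ _) (Rmin_r _ _)).
set S := square p del.
rewrite (@contour_excise g r p del) //; try lra.
have Hnear z : on_boundary S z -> Cmod (z - p) < d /\ z <> p.
  move=> Hz; split.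
    have := square_dist_le (on_boundary_in_rect _ _ Hz); rewrite /S /=; lra.
  by move=> E; case: Hz; rewrite E /S /=; lra.
have ES : ex_contour g S.
  apply: ex_contour_continuous; rewrite /S /=; try lra.
  move=> z Hz; have [_ Hzp] := Hnear z Hz.
  apply: C_differentiable_continuous; apply: Hd => //.
  by apply: in_sub_rect (on_boundary_in_rect _ _ Hz); rewrite /sub_rect /S /=; lra.
apply: Rle_trans (@norm_contour_le g S (Rabs M) _ _ ES _) _; rewrite /S /=; try lra.
  by move=> z /Hnear [/HM Hz _]; apply: Rle_trans Hz (Rle_abs _).
have := Rabs_pos M; nra.
Qed.

Lemma RInt_ge_const (f : R -> R) (a b I c : R) : a <= b -> is_RInt f a b I ->
  (forall t, a <= t <= b -> c <= f t) -> (b - a) * c <= I.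
Proof.
move=> Hab HI Hc.
have := RInt_le (fun _ => c) f a b Hab (ex_RInt_const _ _ _) (ex_intro _ I HI)
  (fun t Ht => Hc t ltac:(lra)).
by rewrite RInt_const (is_RInt_unique f a b I HI) /scal /= /mult /=; lra.
Qed.

Lemma Poisson_kernel_ge (r s : R) : 0 < r -> Rabs s <= r -> 1 / (2 * r) <= r / (s * s + r * r).
Proof.
move=> Hr Hs.
have Hs2 : s * s <= r * r.
  have -> : (s * s = Rabs s * Rabs s)%R by rewrite -Rabs_mult Rabs_pos_eq; nra.
  by have := Rabs_pos s; nra.
have -> : (1 / (2 * r) = r / (2 * r * r))%R by field; lra.
apply: Rmult_le_compat_l; first lra.
apply: Rinv_le_contravar; nra.
Qed.

Lemma square_boundary_dist (a : C) (r : R) (z : C) : 0 < r ->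
  on_boundary (square a r) z -> r <= Cmod (z - a).
Proof.
move=> Hr Hz.
have F : Rabs (fst z - fst a) <= Cmod (z - a) := Rabs_fst_le_Cmod (z - a).
have S : Rabs (snd z - snd a) <= Cmod (z - a) := Rabs_snd_le_Cmod (z - a).
have side (x : R) : x = (- r)%R \/ x = r -> r <= Rabs x.
  by case=> ->; rewrite ?Rabs_Ropp Rabs_pos_eq; lra.
move: Hz; rewrite /on_boundary /square /= => -[[_ E]|[_ E]].
- by apply: Rle_trans S; apply: side; case: E => ->; [left | right]; ring.
- by apply: Rle_trans F; apply: side; case: E => ->; [left | right]; ring.
Qed.

Lemma Im_contour_ge (g : C -> C) (r : rect) (c : R) :
  rx0 r <= rx1 r -> ry0 r <= ry1 r -> ex_contour g r ->
  (forall t, rx0 r <= t <= rx1 r -> c <= snd (g (t, ry0 r))) ->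
  (forall t, ry0 r <= t <= ry1 r -> c <= fst (g (rx1 r, t))) ->
  (forall t, rx0 r <= t <= rx1 r -> c <= - snd (g (t, ry1 r))) ->
  (forall t, ry0 r <= t <= ry1 r -> c <= - fst (g (rx0 r, t))) ->
  2 * ((rx1 r - rx0 r) + (ry1 r - ry0 r)) * c <= snd (contour g r).
Proof.
move=> Hx Hy [E1 [E2 [E3 E4]]] Hb Hr Ht Hl.
have -> (X Y Z W : C) : snd (X + Ci * Y - Z - Ci * W) = (snd X + fst Y - snd Z - fst W)%R.
  by case: X => ? ?; case: Y => ? ?; case: Z => ? ?; case: W => ? ? /=; ring.
set xs := (rx1 r - rx0 r)%R; set ys := (ry1 r - ry0 r)%R.
have B : xs * c <= snd (CInt (fun t => g (t, ry0 r)) (rx0 r) (rx1 r)) :=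
  RInt_ge_const Hx (is_RInt_fct_extend_snd _ _ _ _ (CInt_correct E1)) Hb.
have R' : ys * c <= fst (CInt (fun t => g (rx1 r, t)) (ry0 r) (ry1 r)) :=
  RInt_ge_const Hy (is_RInt_fct_extend_fst _ _ _ _ (CInt_correct E4)) Hr.
have T : xs * c <= - snd (CInt (fun t => g (t, ry1 r)) (rx0 r) (rx1 r)) :=
  RInt_ge_const Hx (is_RInt_opp _ _ _ _ (is_RInt_fct_extend_snd _ _ _ _ (CInt_correct E2))) Ht.
have L : ys * c <= - fst (CInt (fun t => g (rx0 r, t)) (ry0 r) (ry1 r)) :=
  RInt_ge_const Hy (is_RInt_opp _ _ _ _ (is_RInt_fct_extend_fst _ _ _ _ (CInt_correct E3))) Hl.
lra.
Qed.

(* The integral is [2 pi i]; each side contributes at least [1] to its imaginary part. *)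
Lemma contour_inv_sub_ge (a : C) (r : R) : 0 < r ->
  4 <= Cmod (contour (fun z => / (z - a)) (square a r)).
Proof.
move=> Hr.
have Ex : ex_contour (fun z => / (z - a)) (square a r).
  apply: ex_contour_continuous; rewrite /square /=; try lra.
  move=> z Hz; apply: C_differentiable_continuous; apply: C_differentiable_inv_sub => E.
  by move: Hz; rewrite E /on_boundary /square /=; lra.
apply: Rle_trans (Rle_trans _ _ _ (Rle_abs _) (Rabs_snd_le_Cmod _)).
apply: Rle_trans (Im_contour_ge (c := (1 / (2 * r))%R) _ _ Ex _ _ _ _); rewrite /square /=.
- by apply: Req_le; field; lra.
- lra.
- lra.
- move=> t Ht; apply: Rle_trans (Poisson_kernel_ge (s := (t - fst a)%R) Hr _) _.
    by apply: Rabs_le; lra.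
  by right; f_equal; ring.
- move=> t Ht; apply: Rle_trans (Poisson_kernel_ge (s := (t - snd a)%R) Hr _) _.
    by apply: Rabs_le; lra.
  by right; f_equal; ring.
- move=> t Ht; rewrite -Rdiv_opp_l.
  apply: Rle_trans (Poisson_kernel_ge (s := (t - fst a)%R) Hr _) _.
    by apply: Rabs_le; lra.
  by right; f_equal; ring.
- move=> t Ht; rewrite -Rdiv_opp_l.
  apply: Rle_trans (Poisson_kernel_ge (s := (t - snd a)%R) Hr _) _.
    by apply: Rabs_le; lra.
  by right; f_equal; ring.
Qed.

Lemma contour_slope_eq0 (h : C -> C) (r : rect) (p : C) :
  rx0 r < fst p < rx1 r -> ry0 r < snd p < ry1 r ->
  (forall z, in_rect r z -> C_differentiable h z) ->
  contour (fun z => (h z - h p) * / (z - p)) r = 0.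
Proof.
move=> Hpx Hpy Hd; apply: (contour_punctured (p := p)) => //.
  by move=> z Hz Hzp; apply: C_differentiable_slope => //; apply: Hd.
by apply: slope_bounded_near; apply: Hd; rewrite /in_rect; lra.
Qed.

Section LocalVariation.

Variables (h : C -> C) (M : R) (a b : C).
Hypotheses (Hd : forall w, in_disk w -> C_differentiable h w)
  (HM : forall w, in_disk w -> Cmod (h w) <= M)
  (Ha : in_disk a) (Hab : Cmod (b - a) <= (1 - Cmod a) / 256).

Let r : R := ((1 - Cmod a) / 4)%R.
Let Q : rect := square a r.

Let r_pos : 0 < r.
Proof. by rewrite /r; move: Ha; rewrite /in_disk; lra. Qed.

Let proper_Q : rx0 Q <= rx1 Q /\ ry0 Q <= ry1 Q.
Proof. by rewrite /Q /square /=; have := r_pos; lra. Qed.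

Let Q_in_disk (z : C) : in_rect Q z -> in_disk z.
Proof.
move=> /square_dist_le Hza.
have := Cmod_triangle a (z - a); have -> : a + (z - a) = z by ring.
by move: Ha; rewrite /in_disk /r in Hza *; lra.
Qed.

Let b_inside : rx0 Q < fst b < rx1 Q /\ ry0 Q < snd b < ry1 Q.
Proof.
have Fx : Rabs (fst b - fst a) <= Cmod (b - a) := Rabs_fst_le_Cmod (b - a).
have Fy : Rabs (snd b - snd a) <= Cmod (b - a) := Rabs_snd_le_Cmod (b - a).
have := r_pos; move: Fx Fy; rewrite /Q /square /r /=.
by move=> /Rabs_le_between Fx /Rabs_le_between Fy; lra.
Qed.

Let far_from_b (z : C) : on_boundary Q z -> r / 2 <= Cmod (z - b).
Proof.
move=> Hz; have Hza := square_boundary_dist r_pos Hz.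
have := Cmod_sub_ge (z - a) (b - a); have -> : z - a - (b - a) = z - b by ring.
by have := r_pos; rewrite /r in Hza *; lra.
Qed.

Let resolvent_difference_le (z : C) : on_boundary Q z ->
  Cmod ((b - a) * / ((z - b) * (z - a))) <= Cmod (b - a) * (2 / (r * r)).
Proof.
move=> Hz; have Hza := square_boundary_dist r_pos Hz; have Hzb := far_from_b Hz.
have Hr := r_pos.
have Hpos : 0 < Cmod (z - b) * Cmod (z - a) by nra.
rewrite Cmod_mult Cmod_inv ?Cmod_mult; last by move/(f_equal Cmod); rewrite Cmod_mult Cmod_0; lra.
have Hb := Cmod_ge_0 (b - a).
apply: Rmult_le_compat_l => //.
apply: (Rmult_le_reg_r (Cmod (z - b) * Cmod (z - a))) => //.
rewrite Rinv_l; last lra.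
apply: (Rmult_le_reg_r (r * r)); first nra.
have -> : (2 * / (r * r) * (Cmod (z - b) * Cmod (z - a)) * (r * r)
  = 2 * (Cmod (z - b) * Cmod (z - a)))%R by field; lra.
nra.
Qed.

Let boundary_avoids (z : C) : on_boundary Q z -> z <> a /\ z <> b.
Proof.
move=> Hz; have Hza := square_boundary_dist r_pos Hz; have Hzb := far_from_b Hz.
have E0 (u : C) : Cmod (u - u) = 0 by rewrite -Cmod_0; f_equal; ring.
by have := r_pos; split=> E; [move: Hza | move: Hzb]; rewrite E E0; lra.
Qed.

Let boundary_in_disk (z : C) : on_boundary Q z -> in_disk z.
Proof. by move=> Hz; apply: Q_in_disk; apply: on_boundary_in_rect Hz; apply proper_Q. Qed.

Let ex_contour_Q (f : C -> C) :
  (forall z, on_boundary Q z -> C_differentiable f z) -> ex_contour f Q.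
Proof.
move=> Hf; have [Hx Hy] := proper_Q.
by apply: ex_contour_continuous => // z /Hf /C_differentiable_continuous.
Qed.

Let perimeter_Q : ((rx1 Q - rx0 Q) + (ry1 Q - ry0 Q) = 4 * r)%R.
Proof. by rewrite /Q /square /=; ring. Qed.

Let ka (z : C) : C := / (z - a).
Let kb (z : C) : C := / (z - b).

Let ex_contour_kab : ex_contour ka Q /\ ex_contour kb Q.
Proof.
by split; apply: ex_contour_Q => z /boundary_avoids [Hza Hzb]; apply: C_differentiable_inv_sub.
Qed.

Let resolvent_contour_le : Cmod (contour kb Q - contour ka Q) <= 16 * (Cmod (b - a) / r).
Proof.
have [Eka Ekb] := ex_contour_kab; have [Hx Hy] := proper_Q; have Hr := r_pos.
rewrite -contour_minus //.
apply: Rle_trans (norm_contour_le (M := (Cmod (b - a) * (2 / (r * r)))%R) Hx Hy _ _) _.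
- exact: ex_contour_minus.
- move=> z Hz; have [Hza Hzb] := boundary_avoids Hz.
  have -> : kb z - ka z = (b - a) * / ((z - b) * (z - a)).
    by rewrite /kb /ka; field; split; apply: Cminus_eq_contra.
  exact: resolvent_difference_le.
- by rewrite perimeter_Q; apply: Req_le; field; lra.
Qed.

(* Cauchy's formula in disguise: the contour integrals of the slopes of [h] at
   [a] and [b] vanish, so [(h b - h a)] times the integral of [kb] is the
   integral of [(h z - h a) (kb z - ka z)]. *)
Let variation_contour_le : Cmod ((h b - h a) * contour kb Q) <= 32 * M * (Cmod (b - a) / r).
Proof.
have [Eka Ekb] := ex_contour_kab; have [Hx Hy] := proper_Q; have [Hbx Hby] := b_inside.
have Hr := r_pos.
set ga := fun z => (h z - h a) * / (z - a); set gb := fun z => (h z - h b) * / (z - b).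
have Ega : ex_contour ga Q.
  apply: ex_contour_Q => z Hz; have [Hza _] := boundary_avoids Hz.
  by apply: C_differentiable_slope => //; apply: Hd; apply: boundary_in_disk.
have Egb : ex_contour gb Q.
  apply: ex_contour_Q => z Hz; have [_ Hzb] := boundary_avoids Hz.
  by apply: C_differentiable_slope => //; apply: Hd; apply: boundary_in_disk.
have HdQ z : in_rect Q z -> C_differentiable h z by move/Q_in_disk; apply: Hd.
have Za : contour ga Q = 0 by apply: contour_slope_eq0 => //; rewrite /Q /square /=; lra.
have Zb : contour gb Q = 0 by apply: contour_slope_eq0.
have -> : (h b - h a) * contour kb Q = contour (fun z => gb z + (h b - h a) * kb z - ga z) Q.
  by rewrite contour_minus ?contour_plus ?contour_scal ?Za ?Zb //;
    [ring | apply: ex_contour_scal | apply: ex_contour_plus => //; apply: ex_contour_scal].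
apply: Rle_trans (norm_contour_le (M := (2 * M * (Cmod (b - a) * (2 / (r * r))))%R) Hx Hy _ _) _.
- by apply: ex_contour_minus => //; apply: ex_contour_plus => //; apply: ex_contour_scal.
- move=> z Hz; have [Hza Hzb] := boundary_avoids Hz.
  have -> : gb z + (h b - h a) * kb z - ga z = (h z - h a) * ((b - a) * / ((z - b) * (z - a))).
    by rewrite /gb /kb /ga; field; split; apply: Cminus_eq_contra.
  rewrite Cmod_mult; apply: Rmult_le_compat; try apply: Cmod_ge_0; last first.
    exact: resolvent_difference_le.
  apply: Rle_trans (Cmod_triangle (h z) (- h a)) _; rewrite Cmod_opp.
  by have := HM (boundary_in_disk Hz); have := HM Ha; lra.
- by rewrite perimeter_Q; apply: Req_le; field; lra.
Qed.

Lemma bounded_holomorphic_variation : Cmod (h b - h a) <= M / 4.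
Proof.
have Hr := r_pos.
have HM0 : 0 <= M by have := HM Ha; have := Cmod_ge_0 (h a); lra.
have Her : Cmod (b - a) / r <= 1 / 64.
  apply: (Rmult_le_reg_r r) => //; rewrite /Rdiv Rmult_assoc Rinv_l; last lra.
  by move: Hab; rewrite /r; lra.
have Hka : 4 <= Cmod (contour ka Q) := contour_inv_sub_ge a Hr.
have Hkb : 3 <= Cmod (contour kb Q).
  have := Cmod_sub_ge (contour ka Q) (contour ka Q - contour kb Q).
  have -> : contour ka Q - (contour ka Q - contour kb Q) = contour kb Q by ring.
  by rewrite Cmod_distC; have := resolvent_contour_le; lra.
have := variation_contour_le; rewrite Cmod_mult.
by have := Cmod_ge_0 (h b - h a); have := Cmod_ge_0 (b - a); nra.
Qed.

End LocalVariation.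

Lemma in_disk_near (a b : C) : in_disk a -> Cmod (b - a) <= (1 - Cmod a) / 256 -> in_disk b.
Proof.
rewrite /in_disk => Ha Hab; have := Cmod_triangle a (b - a).
have -> : a + (b - a) = b by ring.
by have := Cmod_ge_0 a; lra.
Qed.

(* Equally spaced points on the segment from [w0] to [w] give the chain: the
   segment stays in the closed disk of radius [max |w0| |w|]. *)
Lemma disk_chain_ind (P : C -> Prop) (w0 : C) : in_disk w0 -> P w0 ->
  (forall a b, in_disk a -> Cmod (b - a) <= (1 - Cmod a) / 256 -> P a -> P b) ->
  forall w, in_disk w -> P w.
Proof.
rewrite /in_disk => H0 P0 Hstep w Hw.
set rho := Rmax (Cmod w0) (Cmod w).
have Hrho : rho < 1 by apply: Rmax_lub_lt.
have [Hrho0 Hrho1] : Cmod w0 <= rho /\ Cmod w <= rho by split; [apply: Rmax_l | apply: Rmax_r].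
have [N [HN HN0]] := archimed_cor1 ((1 - rho) / 512) ltac:(lra).
have HNp : 0 < INR N by apply: lt_0_INR.
set p := fun i : nat => w0 + RtoC (INR i / INR N) * (w - w0).
have Hp i : (i <= N)%coq_nat -> Cmod (p i) <= rho.
  move=> Hi; set t := (INR i / INR N)%R.
  have Ht0 : 0 <= t by apply: Rdiv_le_0_compat => //; apply: pos_INR.
  have Ht1 : t <= 1.
    apply: (Rmult_le_reg_r (INR N)) => //.
    by rewrite /t /Rdiv Rmult_assoc Rinv_l ?Rmult_1_r ?Rmult_1_l; [apply: le_INR | lra].
  have -> : p i = RtoC (1 - t) * w0 + RtoC t * w by rewrite /p -/t; apply: C_ext => /=; ring.
  apply: Rle_trans (Cmod_triangle _ _) _.
  by rewrite !Cmod_mult !Cmod_R !Rabs_pos_eq; nra.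
have Hd i : Cmod (p i.+1 - p i) <= (1 - rho) / 256.
  have -> : p i.+1 - p i = RtoC (/ INR N) * (w - w0).
    by rewrite /p S_INR; apply: C_ext => /=; field; lra.
  rewrite Cmod_mult Cmod_R Rabs_pos_eq; last by apply: Rlt_le; apply: Rinv_0_lt_compat.
  have : Cmod (w - w0) <= 2.
    by apply: Rle_trans (Cmod_triangle w (- w0)) _; rewrite Cmod_opp; lra.
  have := Cmod_ge_0 (w - w0); have : 0 < / INR N by apply: Rinv_0_lt_compat.
  nra.
have Hall i : (i <= N)%coq_nat -> P (p i).
  elim: i => [_|i IH Hi].
    by have -> : p 0%N = w0 by rewrite /p /=; apply: C_ext => /=; rewrite /Rdiv Rmult_0_l; ring.
  have Hi' : (i <= N)%coq_nat by lia.
  apply: (Hstep (p i)); last exact: IH.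
    by have := Hp i Hi'; lra.
  by have := Hd i; have := Hp i Hi'; lra.
have -> : w = p N by rewrite /p; apply: C_ext => /=; field; lra.
by apply: Hall; lia.
Qed.

(** * Characters of H^oo(D x N) *)

Lemma HinfDN_plus (f g : nat -> C -> C) : HinfDN f -> HinfDN g ->
  HinfDN (fun k w => f k w + g k w).
Proof.
move=> [Df [Mf Hf]] [Dg [Mg Hg]]; split.
  by move=> k w Hw; apply: C_differentiable_plus; [apply: Df | apply: Dg].
exists (Mf + Mg)%R => k w Hw; apply: Rle_trans (Cmod_triangle _ _) _.
by have := Hf k w Hw; have := Hg k w Hw; lra.
Qed.

Lemma HinfDN_mult (f g : nat -> C -> C) : HinfDN f -> HinfDN g ->
  HinfDN (fun k w => f k w * g k w).
Proof.
move=> [Df [Mf Hf]] [Dg [Mg Hg]]; split.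
  by move=> k w Hw; apply: C_differentiable_mult; [apply: Df | apply: Dg].
exists (Rabs Mf * Rabs Mg)%R => k w Hw; rewrite Cmod_mult.
have := Hf k w Hw; have := Hg k w Hw; have := Rle_abs Mf; have := Rle_abs Mg.
by have := Cmod_ge_0 (f k w); have := Cmod_ge_0 (g k w); nra.
Qed.

Definition const_seq (s : nat -> C) : nat -> C -> C := fun k _ => s k.

Definition bounded_seq (s : nat -> C) : Prop := exists M, forall k, Cmod (s k) <= M.

Lemma HinfDN_const_seq (s : nat -> C) : bounded_seq s -> HinfDN (const_seq s).
Proof.
move=> [M HM]; split; last by exists M => k w _; apply: HM.
by move=> k w _; apply: C_differentiable_const.
Qed.

Lemma bounded_seq_const (c : C) : bounded_seq (fun _ => c).
Proof. by exists (Cmod c) => k; lra. Qed.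

Section Characters.

Variable phi : (nat -> C -> C) -> C.
Hypothesis Hphi : charDN phi.

Let HinfDN_const (c : C) : HinfDN (fun _ _ => c) := HinfDN_const_seq (bounded_seq_const c).

Lemma charDN_const (c : C) : phi (fun _ _ => c) = c.
Proof.
move: Hphi => [_ [Hscal [_ [Hone Heqv]]]].
have -> : phi (fun _ _ => c) = phi (fun k w => c * (fun _ _ => 1) k w).
  by apply: Heqv; [exact: HinfDN_const | exact: HinfDN_const (c * 1) | move=> k w _; ring].
by rewrite Hscal // Hone; ring.
Qed.

Lemma charDN_add_const (g : nat -> C -> C) (c : C) : HinfDN g ->
  phi (fun k w => g k w + c) = phi g + c.
Proof. by move: Hphi => [Hadd _] Hg; rewrite (Hadd g (fun _ _ => c)) // charDN_const. Qed.

Lemma charDN_unit_neq0 (g : nat -> C -> C) (c : R) : HinfDN g -> 0 < c ->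
  (forall k w, in_disk w -> c <= Cmod (g k w)) -> phi g <> 0.
Proof.
move: Hphi => [_ [_ [Hmul [Hone Heqv]]]] Hg Hc Hgc Hg0.
have Hnz k w : in_disk w -> g k w <> 0.
  by move=> Hw; apply/Cmod_gt_0; have := Hgc k w Hw; lra.
have Hu : HinfDN (fun k w => / g k w).
  split; first by move=> k w Hw; apply: C_differentiable_inv (Hnz k w Hw); apply: (proj1 Hg).
  exists (/ c)%R => k w Hw; rewrite Cmod_inv; last exact: Hnz.
  by apply: Rinv_le_contravar => //; apply: Hgc.
have E : phi (fun k w => g k w * / g k w) = phi (fun _ _ => 1).
  by apply: Heqv => //; [apply: HinfDN_mult | move=> k w Hw; field; apply: Hnz].
by apply: C1_nz; rewrite -Hone -E Hmul // Hg0 Cmult_0_l.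
Qed.

Lemma charDN_norm_le (g : nat -> C -> C) (M : R) : HinfDN g ->
  (forall k w, in_disk w -> Cmod (g k w) <= M) -> Cmod (phi g) <= M.
Proof.
move=> Hg HM; apply: Rnot_lt_le => Hlt.
apply: (@charDN_unit_neq0 (fun k w => g k w + - phi g) (Cmod (phi g) - M)).
- exact: HinfDN_plus Hg (HinfDN_const _).
- by lra.
- move=> k w Hw /=; have := Cmod_sub_ge (phi g) (phi g - g k w).
  have -> : phi g - (phi g - g k w) = g k w by ring.
  have -> : g k w + - phi g = - (phi g - g k w) by ring.
  by rewrite Cmod_opp; have := HM k w Hw; lra.
- by rewrite charDN_add_const //; ring.
Qed.

Lemma charDN_idempotent (e : nat -> C -> C) : HinfDN e ->
  (forall k w, in_disk w -> e k w * e k w = e k w) -> phi e = 0 \/ phi e = 1.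
Proof.
move: Hphi => [_ [_ [Hmul [_ Heqv]]]] He Hidem.
have E : phi e * (phi e - 1) = 0.
  have -> : phi e * (phi e - 1) = phi e * phi e - phi e by ring.
  by rewrite -Hmul // (Heqv _ _ (HinfDN_mult He He) He Hidem); ring.
have := f_equal Cmod E; rewrite Cmod_mult Cmod_0 => /Rmult_integral [/Cmod_eq_0 ->|/Cmod_eq_0 E1].
  by left.
right; have -> : phi e = (phi e - 1) + 1 by ring.
by rewrite E1; ring.
Qed.

Lemma charDN_const_seq_affine (s : nat -> C) (a b : C) : bounded_seq s ->
  phi (const_seq (fun k => a * s k + b)) = a * phi (const_seq s) + b.
Proof.
move: Hphi => [_ [Hscal _]] [M HM].
have Has : bounded_seq (fun k => a * s k).
  exists (Cmod a * M)%R => k; rewrite Cmod_mult.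
  by apply: Rmult_le_compat_l; [apply: Cmod_ge_0 | apply: HM].
rewrite /const_seq charDN_add_const; last exact: HinfDN_const_seq Has.
by rewrite (Hscal a (const_seq s)) //; apply: HinfDN_const_seq; exists M.
Qed.

Lemma charDN_const_seq_mul (s t : nat -> C) : bounded_seq s -> bounded_seq t ->
  phi (const_seq (fun k => s k * t k)) = phi (const_seq s) * phi (const_seq t).
Proof.
move: Hphi => [_ [_ [Hmul _]]] Hs Ht.
exact: Hmul (const_seq s) (const_seq t) (HinfDN_const_seq Hs) (HinfDN_const_seq Ht).
Qed.

End Characters.

(** * Analytic disks *)

Lemma analytic_disk_variation (tau : C -> (nat -> C -> C) -> C) (g : nat -> C -> C) (M : R)
  (a b : C) : analytic_disk_map tau -> HinfDN g -> (forall k w, in_disk w -> Cmod (g k w) <= M) ->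
  in_disk a -> Cmod (b - a) <= (1 - Cmod a) / 256 -> Cmod (tau b g - tau a g) <= M / 4.
Proof.
move=> [Hch [_ [_ Hhol]]] Hg HM Ha Hab.
have [_ Hdiff] := Hhol g Hg.
apply: (bounded_holomorphic_variation (h := fun w => tau w g)) Hdiff _ Ha Hab => w Hw.
apply (charDN_norm_le (Hch w Hw) Hg HM).
Qed.

Lemma analytic_disk_idempotent_const (tau : C -> (nat -> C -> C) -> C) (w0 : C)
  (e : nat -> C -> C) : analytic_disk_map tau -> in_disk w0 -> HinfDN e ->
  (forall k w, in_disk w -> e k w * e k w = e k w) ->
  (forall k w, in_disk w -> Cmod (e k w) <= 1) ->
  forall w, in_disk w -> tau w e = tau w0 e.
Proof.
move=> Htau Hw0 He Hidem He1.
apply: (@disk_chain_ind (fun w => tau w e = tau w0 e) w0) => // a b Ha Hab <-.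
have Hb := in_disk_near Ha Hab.
have Hvar := analytic_disk_variation Htau He He1 Ha Hab.
have E10 : (Cmod (1 - 0) = 1)%R by rewrite (_ : 1 - 0 = 1) ?Cmod_1 //; ring.
have E01 : (Cmod (0 - 1) = 1)%R by rewrite Cmod_distC.
have [Ea | Ea] := charDN_idempotent (proj1 Htau a Ha) He Hidem;
  have [Eb | Eb] := charDN_idempotent (proj1 Htau b Hb) He Hidem;
  rewrite Ea Eb // in Hvar *; rewrite ?E10 ?E01 in Hvar; lra.
Qed.

Definition indicator_ge (t : nat -> C) (c : R) : nat -> C :=
  fun k => if Rle_dec c (Cmod (t k)) then 1 else 0.

Lemma indicator_ge_le1 (t : nat -> C) (c : R) (k : nat) : Cmod (indicator_ge t c k) <= 1.
Proof. by rewrite /indicator_ge; case: Rle_dec => ? /=; rewrite ?Cmod_1 ?Cmod_0; lra. Qed.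

Lemma bounded_indicator_ge (t : nat -> C) (c : R) : bounded_seq (indicator_ge t c).
Proof. by exists 1%R => k; apply: indicator_ge_le1. Qed.

Lemma indicator_ge_idem (t : nat -> C) (c : R) (k : nat) :
  indicator_ge t c k * indicator_ge t c k = indicator_ge t c k.
Proof. by rewrite /indicator_ge; case: (Rle_dec c (Cmod (t k))) => ? /=; ring. Qed.

Section IndicatorCharacter.

Variable phi : (nat -> C -> C) -> C.
Hypothesis Hphi : charDN phi.
Variables (t : nat -> C) (c : R).
Hypothesis Ht : bounded_seq t.

Lemma charDN_indicator_ge_eq0 : 0 < c -> phi (const_seq t) = 0 ->
  phi (const_seq (indicator_ge t c)) = 0.
Proof.
move=> Hc Ht0.
set u := fun k => if Rle_dec c (Cmod (t k)) then / t k else 0.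
have Hu : bounded_seq u.
  exists (/ c)%R => k; rewrite /u; case: Rle_dec => H /=.
    have Htk : t k <> 0 by apply/Cmod_gt_0; lra.
    by rewrite Cmod_inv //; apply: Rinv_le_contravar.
  by rewrite Cmod_0; apply: Rlt_le; apply: Rinv_0_lt_compat.
have -> : const_seq (indicator_ge t c) = const_seq (fun k => t k * u k).
  congr const_seq; apply: functional_extensionality => k.
  rewrite /indicator_ge /u; case: Rle_dec => H /=; last by ring.
  by field; apply/Cmod_gt_0; lra.
by rewrite charDN_const_seq_mul // Ht0 Cmult_0_l.
Qed.

Lemma charDN_indicator_ge_eq1 : 0 <= c -> c < Cmod (phi (const_seq t)) ->
  phi (const_seq (indicator_ge t c)) = 1.
Proof.
move=> Hc Hlt.
have [E0|//] := charDN_idempotent Hphi (HinfDN_const_seq (bounded_indicator_ge t c))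
  (fun k _ _ => indicator_ge_idem t c k).
set f := fun k => if Rle_dec c (Cmod (t k)) then (0 : C) else 1.
have Hf : bounded_seq f.
  by exists 1%R => k; rewrite /f; case: Rle_dec => H /=; rewrite ?Cmod_0 ?Cmod_1; lra.
have Ef : phi (const_seq f) = 1.
  have -> : const_seq f = const_seq (fun k => (-1) * indicator_ge t c k + 1).
    congr const_seq; apply: functional_extensionality => k.
    by rewrite /f /indicator_ge; case: Rle_dec => H /=; ring.
  by rewrite charDN_const_seq_affine ?E0 //; [ring | apply: bounded_indicator_ge].
have Hsmall k : Cmod (f k * t k) <= c.
  rewrite /f; case: Rle_dec => H /=; first by rewrite Cmult_0_l Cmod_0.
  by rewrite Cmult_1_l; have := Rnot_le_lt _ _ H; lra.
have := charDN_norm_le Hphi (HinfDN_const_seq (ex_intro _ c Hsmall)) (fun k _ _ => Hsmall k).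
by rewrite charDN_const_seq_mul // Ef Cmult_1_l; lra.
Qed.

End IndicatorCharacter.

(* Constant-in-[w] elements of H^oo(D x N) form a copy of l^oo, whose maximal
   ideal space is totally disconnected: an analytic disk cannot move on it. *)
Lemma analytic_disk_const_seq (tau : C -> (nat -> C -> C) -> C) (w0 : C) (s : nat -> C) :
  analytic_disk_map tau -> in_disk w0 -> bounded_seq s ->
  forall w, in_disk w -> tau w (const_seq s) = tau w0 (const_seq s).
Proof.
move=> Htau Hw0 Hs w Hw.
have Hch := proj1 Htau.
set c := tau w0 (const_seq s); set d := tau w (const_seq s) - c.
have [Hd0|Hd0] := Ceq_dec d 0.
  have -> : tau w (const_seq s) = d + c by rewrite /d; ring.
  by rewrite Hd0; ring.
have Hdp : 0 < Cmod d by apply/Cmod_gt_0.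
set t := fun k => 1 * s k + - c.
have Ht : bounded_seq t.
  have [M HM] := Hs; exists (M + Cmod c)%R => k; rewrite /t Cmult_1_l.
  by apply: Rle_trans (Cmod_triangle _ _) _; rewrite Cmod_opp; have := HM k; lra.
have Ht0 : tau w0 (const_seq t) = 0.
  by rewrite (charDN_const_seq_affine (Hch w0 Hw0)) // -/c; ring.
have Ht1 : tau w (const_seq t) = d.
  by rewrite (charDN_const_seq_affine (Hch w Hw)) // /d; ring.
have E0 := charDN_indicator_ge_eq0 (Hch w0 Hw0) Ht (c := (Cmod d / 2)%R) ltac:(lra) Ht0.
have E1 := charDN_indicator_ge_eq1 (Hch w Hw) Ht (c := (Cmod d / 2)%R) ltac:(lra)
  ltac:(rewrite Ht1; lra).
have := analytic_disk_idempotent_const Htau Hw0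
  (HinfDN_const_seq (bounded_indicator_ge t (Cmod d / 2)))
  (fun k _ _ => indicator_ge_idem t _ k) (fun k _ _ => indicator_ge_le1 t _ k) Hw.
by rewrite E0 E1 => /C1_nz.
Qed.

Lemma HinfDN_lift (f : C -> C) : Hinf1 f -> HinfDN (fun _ => f).
Proof. by move=> [[M HM] Hd]; split=> //; exists M => k w Hw; apply: HM. Qed.

Definition const_restrict (phi : (nat -> C -> C) -> C) : (C -> C) -> C :=
  fun f => phi (fun _ => f).

Lemma char1_const_restrict (phi : (nat -> C -> C) -> C) :
  charDN phi -> char1 (const_restrict phi).
Proof.
move=> [Hadd [Hscal [Hmul [Hone Heqv]]]].
split; [|split; [|split; [|split]]].
- by move=> f g /HinfDN_lift Hf /HinfDN_lift Hg; apply: Hadd.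
- by move=> c f /HinfDN_lift Hf; apply: Hscal.
- by move=> f g /HinfDN_lift Hf /HinfDN_lift Hg; apply: Hmul.
- exact: Hone.
- by move=> f g /HinfDN_lift Hf /HinfDN_lift Hg Hfg; apply: Heqv => // k; apply: Hfg.
Qed.

Lemma in_Ms_part_trivial (xi eta : (C -> C) -> C) : in_Ms xi -> char1 eta ->
  Rbar_lt (rho xi eta) (Coquelicot.Rbar.Finite 1%R) -> char1_eq xi eta.
Proof.
move=> [Hxi HMs] Heta Hrho; apply: NNPP => Hne.
by apply: HMs; split=> //; exists eta.
Qed.

Lemma analytic_disk_rho_le (tau : C -> (nat -> C -> C) -> C) (xi : (C -> C) -> C) (a b : C) :
  analytic_disk_map tau -> in_disk a -> Cmod (b - a) <= (1 - Cmod a) / 256 ->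
  char1_eq (const_restrict (tau a)) xi ->
  Rbar_le (rho xi (const_restrict (tau b))) (Coquelicot.Rbar.Finite (1 / 4)%R).
Proof.
move=> Htau Ha Hab Hxi; apply: (proj2 (Lub_Rbar_correct _)) => _ [f [Hf [Hf1 [Hxf ->]]]] /=.
have := analytic_disk_variation Htau (HinfDN_lift Hf) (fun _ w Hw => Hf1 w Hw) Ha Hab.
rewrite /const_restrict in Hxi *; rewrite (Hxi f Hf) Hxf.
by have -> : tau b (fun _ => f) - 0 = tau b (fun _ => f) by ring.
Qed.

Lemma analytic_disk_Ms_const (tau : C -> (nat -> C -> C) -> C) (w0 : C) (xi : (C -> C) -> C) :
  analytic_disk_map tau -> in_disk w0 -> in_Ms xi ->
  char1_eq (const_restrict (tau w0)) xi ->
  forall w, in_disk w -> char1_eq (const_restrict (tau w)) xi.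
Proof.
move=> Htau Hw0 Hxi H0.
apply: (@disk_chain_ind (fun w => char1_eq (const_restrict (tau w)) xi) w0) => // a b Ha Hab Pa.
have Hb := in_disk_near Ha Hab.
have Heq := in_Ms_part_trivial Hxi (char1_const_restrict (proj1 Htau b Hb))
  (Rbar_le_lt_trans _ _ (Coquelicot.Rbar.Finite 1%R) (analytic_disk_rho_le Htau Ha Hab Pa)
    ltac:(simpl; lra)).
by move=> f Hf; rewrite Heq.
Qed.

(** * The fiber over [xi] *)

Lemma in_polydisk_ext (n : nat) (z : 'I_n.-1 -> C) (w : C) :
  in_polydisk z -> in_disk w -> in_polydisk (ext z w).
Proof. by move=> Hz Hw j; rewrite /ext; case: insub => [j'|] /=; [apply: Hz | apply: Hw]. Qed.

Lemma ext_last (n : nat) (Hlt : (n.-1 < n)%N) (z : 'I_n.-1 -> C) (w : C) :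
  ext z w (Ordinal Hlt) = w.
Proof. by rewrite /ext insubF //= ltnn. Qed.

Lemma upd_ext_last (n : nat) (Hlt : (n.-1 < n)%N) (z : 'I_n.-1 -> C) (w u : C) :
  upd (ext z w) (Ordinal Hlt) u = ext z u.
Proof.
apply: functional_extensionality => i; rewrite /upd.
case: eqP => [->|Hne]; first by rewrite !ext_last.
rewrite /ext; case: insubP => [i' _ _|Hni] //=; exfalso; apply: Hne; apply: val_inj => /=.
by apply/eqP; rewrite eqn_leq -ltnS (prednK (leq_ltn_trans (leq0n _) Hlt)) ltn_ord leqNgt Hni.
Qed.

Lemma HinfDN_Rmap (n : nat) (z : nat -> 'I_n.-1 -> C) (f : ('I_n -> C) -> C) : (0 < n)%N ->
  (forall k, in_polydisk (z k)) -> Hinf f -> HinfDN (Rmap z f).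
Proof.
move=> Hn Hz [[M HM] [_ Hdf]]; split; last by exists M => k w Hw; apply: HM; apply: in_polydisk_ext.
move=> k w Hw.
have Hlt : (n.-1 < n)%N by rewrite prednK.
have := Hdf (ext (z k) w) (in_polydisk_ext (Hz k) Hw) (Ordinal Hlt).
have -> : (fun u => f (upd (ext (z k) w) (Ordinal Hlt) u)) = (fun u => f (ext (z k) u)).
  by apply: functional_extensionality => u; rewrite upd_ext_last.
by rewrite ext_last.
Qed.

Lemma charn_Rstar (n : nat) (z : nat -> 'I_n.-1 -> C) (phi : (nat -> C -> C) -> C) :
  (0 < n)%N -> (forall k, in_polydisk (z k)) -> charDN phi -> charn (Rstar z phi).
Proof.
move=> Hn Hz [Hadd [Hscal [Hmul [Hone Heqv]]]].
have HR f : Hinf f -> HinfDN (Rmap z f) by apply: HinfDN_Rmap.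
split; [|split; [|split; [|split]]].
- by move=> f g /HR Hf /HR Hg; apply: Hadd.
- by move=> c f /HR Hf; apply: Hscal.
- by move=> f g /HR Hf /HR Hg; apply: Hmul.
- exact: Hone.
- move=> f g /HR Hf /HR Hg Hfg; apply: Heqv => // k w Hw.
  by apply: Hfg; apply: in_polydisk_ext.
Qed.

Theorem lemma5p2 (n : nat) (Hn : (2 <= n)%N)
  (xi' : 'I_n.-1 -> (C -> C) -> C) (xin : (C -> C) -> C)
  (Hxi' : forall j, in_Ma (xi' j)) (Hxin : in_Ms xin)
  (z : nat -> 'I_n.-1 -> C) (s : 'I_n.-1 -> nat -> C)
  (Hs : forall j, interpolating1 (s j))
  (Hprod : is_cartesian_product z s)
  (Hz : interpolating z)
  (Hcl : in_closure_seq z xi')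
  (tau : C -> (nat -> C -> C) -> C) (Htau : analytic_disk_map tau)
  (w0 : C) (Hw0 : in_disk w0)
  (Heta : in_fiber (join_pt xi' xin) (Rstar z (tau w0))) :
  forall w : C, in_disk w -> in_fiber (join_pt xi' xin) (Rstar z (tau w)).
Proof.
move=> w Hw.
have Hn0 : (0 < n)%N by apply: leq_trans Hn.
have [Hzp _] := Hz.
split; first exact: charn_Rstar Hn0 Hzp (proj1 Htau w Hw).
move=> j; have := proj2 Heta j.
rewrite /char1_eq /pi_n /Rstar /Rmap /ext /join_pt.
case: (insub (nat_of_ord j)) => [j'|] /= Hj f Hf.
- have Hb : bounded_seq (fun k => f (z k j')).
    by have [[M HM] _] := Hf; exists M => k; apply: HM; apply: Hzp.
  by rewrite -(Hj f Hf); exact: (analytic_disk_const_seq Htau Hw0 Hb Hw).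
- exact (analytic_disk_Ms_const Htau Hw0 Hxin Hj Hw Hf).
Qed.
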